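(* Let $\alpha>-1$. For $z\in\mathbb{C}\setminus[0,\infty)$, as $n\to\infty$, $$\frac{L_n^{(\alpha)}(z)}{L_n^{(\alpha+1)}(z)}=\sqrt{\frac{-z}{n}}+\left(\frac{\alpha}{2}+\frac14+\frac z2\right)\frac1n+\mathcal{O}(n^{-3/2}),$$ uniformly on compact subsets of $\mathbb{C}\setminus[0,\infty)$.
   Context: $L_n^{(\alpha)}(z)=\binom{n+\alpha}{n}\,{}_1F_1(-n;\alpha+1;z)$ is the classical Laguerre polynomial. $\sqrt{-z}$ is the principal branch on $\mathbb{C}\setminus[0,\infty)$. *)

From Stdlib Require Import Reals Factorial List.
Open Scope R_scope.

Definition Cpx : Type := (R * R)%type.
Definition Cre (z : Cpx) : R := fst z.
Definition Cim (z : Cpx) : R := snd z.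
Definition RtoC (x : R) : Cpx := (x, 0).
Definition Cadd (z w : Cpx) : Cpx := (fst z + fst w, snd z + snd w).
Definition Copp (z : Cpx) : Cpx := (- fst z, - snd z).
Definition Csub (z w : Cpx) : Cpx := Cadd z (Copp w).
Definition Cmul (z w : Cpx) : Cpx :=
  (fst z * fst w - snd z * snd w, fst z * snd w + snd z * fst w).
Definition Cscal (a : R) (z : Cpx) : Cpx := (a * fst z, a * snd z).
Definition Cinv (z : Cpx) : Cpx :=
  let d := fst z * fst z + snd z * snd z in (fst z / d, - snd z / d).
Definition Cdiv (z w : Cpx) : Cpx := Cmul z (Cinv w).
Definition Cnorm (z : Cpx) : R := sqrt (fst z * fst z + snd z * snd z).
Fixpoint Cpow (z : Cpx) (k : nat) : Cpx :=
  match k with O => (1, 0) | S k' => Cmul z (Cpow z k') end.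

(** Principal square root (branch cut along (-oo,0]). *)
Definition Csqrt (w : Cpx) : Cpx :=
  let r := Cnorm w in
  (sqrt ((r + fst w) / 2),
   (if Rle_dec 0 (snd w) then 1 else -1) * sqrt ((r - fst w) / 2)).

Fixpoint poch (a : R) (k : nat) : R :=
  match k with O => 1 | S k' => poch a k' * (a + INR k') end.

(** Generalized binomial coefficient binom(n+alpha, n) = (alpha+1)_n / n!. *)
Definition binom_na (n : nat) (alpha : R) : R := poch (alpha + 1) n / INR (fact n).

Fixpoint hyp1F1_sum (n : nat) (b : R) (z : Cpx) (m : nat) : Cpx :=
  let term := fun k => Cscal (poch (- INR n) k / (poch b k * INR (fact k))) (Cpow z k) in
  match m with
  | O => term O
  | S m' => Cadd (hyp1F1_sum n b z m') (term m)
  end.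
Definition hyp1F1_neg (n : nat) (b : R) (z : Cpx) : Cpx := hyp1F1_sum n b z n.

Definition Laguerre (n : nat) (alpha : R) (z : Cpx) : Cpx :=
  Cscal (binom_na n alpha) (hyp1F1_neg n (alpha + 1) z).

Definition Copen (U : Cpx -> Prop) : Prop :=
  forall z, U z -> exists eps, 0 < eps /\ forall w, Cnorm (Csub w z) < eps -> U w.

Definition Ccompact (K : Cpx -> Prop) : Prop :=
  forall (I : Type) (U : I -> Cpx -> Prop),
    (forall i, Copen (U i)) ->
    (forall z, K z -> exists i, U i z) ->
    exists l : list I, forall z, K z -> exists i, List.In i l /\ U i z.

Definition slit_plane (z : Cpx) : Prop := ~ (snd z = 0 /\ 0 <= fst z).

(** We prove that, for [al > -1] and [z] in a compact subset of the slit plane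
    [C \ [0, oo)],
      [L_n^(al)(z) / L_n^(al+1)(z) = sqrt(-z/n) + (al/2 + 1/4 + z/2)/n + O(n^(-3/2))]
    uniformly.  Write [z = -w^2] with [w = sqrt(-z)], so [Re w > 0].

    The proof works with the ratio [r_n] directly rather than with an
    asymptotic formula for [L_n] itself:
    - The contiguous relations between [L^(al)] and [L^(al+1)] (checked on
      coefficients) give a Riccati-type recurrence [r_(n+1) D_n = (n+1+al) r_n - z]
      with [D_n = n+1 - z + (n+1+al) r_n].  The Möbius map behind it preserves
      the half-plane [Re (r conj w) >= 0], so all [L_n^(al+1)(z)] are nonzero.
    - Stage 1: the pseudo-hyperbolic distance [|sqrt n r_n - w| / |sqrt n r_n + w|]
      satisfies [d_(n+1) <= (1 - c/sqrt n) d_n + O(1/n)], hence becomes small.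
    - Stage 2: then the error [e_n = |r_n - (w/sqrt n + c_2/n)|] satisfies
      [e_(n+1) <= (1 - c/sqrt n) e_n + O(n^-2)], whence [e_n = O(n^(-3/2))].
    Both stages end with a discrete Gronwall-type lemma for real sequences.
    All constants depend only on [al] and on bounds [om <= Re w], [|w| <= Wb],
    which compactness provides; this gives uniformity. *)

From Stdlib Require Import Reals Factorial Lra Psatz Lia List.
From Coquelicot Require Complex.
Open Scope R_scope.

Ltac cunfold := unfold Csub, Cdiv, Cadd, Copp, Cmul, Cscal, Cinv, RtoC, Cre, Cim in *; simpl in *.
Ltac ceq := apply injective_projections; cunfold.

Lemma Cnorm_Cmod z : Cnorm z = Coquelicot.Complex.Cmod z.
Proof. unfold Cnorm, Coquelicot.Complex.Cmod. f_equal. simpl. ring. Qed.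

Lemma Cnorm_ge0 z : 0 <= Cnorm z.
Proof. unfold Cnorm. apply sqrt_pos. Qed.

Lemma Cnorm_add_le a b : Cnorm (Cadd a b) <= Cnorm a + Cnorm b.
Proof. rewrite !Cnorm_Cmod. exact (Coquelicot.Complex.Cmod_triangle a b). Qed.

Lemma Cnorm_mul a b : Cnorm (Cmul a b) = Cnorm a * Cnorm b.
Proof. rewrite !Cnorm_Cmod. exact (Coquelicot.Complex.Cmod_mult a b). Qed.

Lemma Cnorm_opp a : Cnorm (Copp a) = Cnorm a.
Proof. rewrite !Cnorm_Cmod. exact (Coquelicot.Complex.Cmod_opp a). Qed.

Lemma Cnorm_RtoC x : Cnorm (RtoC x) = Rabs x.
Proof. rewrite !Cnorm_Cmod. exact (Coquelicot.Complex.Cmod_R x). Qed.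

Lemma Cnorm_scal a z : Cnorm (Cscal a z) = Rabs a * Cnorm z.
Proof.
  replace (Cscal a z) with (Cmul (RtoC a) z) by (ceq; ring).
  rewrite Cnorm_mul, Cnorm_RtoC. reflexivity.
Qed.

Lemma Cnorm_scal_pos k v : 0 <= k -> Cnorm (Cscal k v) = k * Cnorm v.
Proof. intros. rewrite Cnorm_scal, Rabs_right; lra. Qed.

Lemma Cnorm_sub_le a b : Cnorm (Csub a b) <= Cnorm a + Cnorm b.
Proof. unfold Csub. rewrite <- (Cnorm_opp b). apply Cnorm_add_le. Qed.

Lemma Cnorm_sub_rev a b : Cnorm a - Cnorm b <= Cnorm (Csub a b).
Proof.
  pose proof (Cnorm_add_le (Csub a b) b).
  replace (Cadd (Csub a b) b) with a in H by (ceq; ring). lra.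
Qed.

Lemma Cnorm_add_rev a b : Cnorm a - Cnorm b <= Cnorm (Cadd a b).
Proof.
  pose proof (Cnorm_sub_rev a (Copp b)).
  replace (Csub a (Copp b)) with (Cadd a b) in H by (ceq; ring).
  rewrite Cnorm_opp in H. exact H.
Qed.

Lemma Cnorm_sub_sym a b : Cnorm (Csub a b) = Cnorm (Csub b a).
Proof. replace (Csub a b) with (Copp (Csub b a)) by (ceq; ring). apply Cnorm_opp. Qed.

Lemma Cnorm_sq z : Cnorm z * Cnorm z = fst z * fst z + snd z * snd z.
Proof. unfold Cnorm. rewrite sqrt_sqrt; nra. Qed.

Lemma fst_le_Cnorm z : Rabs (fst z) <= Cnorm z.
Proof. rewrite Cnorm_Cmod. apply Coquelicot.Complex.re_le_Cmod. Qed.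

Lemma fst_bounds z B : Cnorm z <= B -> - B <= fst z <= B.
Proof.
  intros H. pose proof (fst_le_Cnorm z).
  pose proof (Rle_abs (fst z)). pose proof (Rle_abs (- fst z)).
  rewrite Rabs_Ropp in *. lra.
Qed.

Lemma Cnorm_le_sq z B : 0 <= B -> fst z * fst z + snd z * snd z <= B * B -> Cnorm z <= B.
Proof. intros HB H. unfold Cnorm. rewrite <- (sqrt_square B HB). apply sqrt_le_1_alt. lra. Qed.

Lemma Cnorm_nz z : z <> (0,0) -> 0 < fst z * fst z + snd z * snd z.
Proof.
  intros H. destruct z as [x y]; simpl.
  destruct (Req_dec x 0); destruct (Req_dec y 0); subst;
    try (exfalso; apply H; reflexivity); nra.
Qed.

Lemma Cnorm_pos z : z <> (0,0) -> 0 < Cnorm z.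
Proof. intros H. unfold Cnorm. apply sqrt_lt_R0. apply Cnorm_nz; auto. Qed.

Lemma nz_of_pos z : 0 < fst z * fst z + snd z * snd z -> z <> (0,0).
Proof. intros H E. rewrite E in H. simpl in H. lra. Qed.

Lemma mul_nz a b : a <> (0,0) -> b <> (0,0) -> Cmul a b <> (0,0).
Proof.
  intros Ha Hb. apply nz_of_pos. pose proof (Cnorm_nz a Ha). pose proof (Cnorm_nz b Hb).
  destruct a as [a1 a2], b as [b1 b2]; simpl in *. nra.
Qed.

Lemma div_mul a b : b <> (0,0) -> Cmul (Cdiv a b) b = a.
Proof.
  intros Hb. pose proof (Cnorm_nz b Hb). destruct a as [a1 a2], b as [b1 b2]; simpl in *.
  ceq; field; lra.
Qed.

Lemma div_eq a b c d : b <> (0,0) -> d <> (0,0) -> Cmul a d = Cmul c b -> Cdiv a b = Cdiv c d.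
Proof.
  intros Hb Hd E. pose proof (Cnorm_nz b Hb). pose proof (Cnorm_nz d Hd).
  destruct a as [a1 a2], b as [b1 b2], c as [c1 c2], d as [d1 d2]; simpl in *.
  unfold Cmul in E; simpl in E.
  pose proof (f_equal fst E) as E1; pose proof (f_equal snd E) as E2; simpl in E1, E2.
  assert (Z1 : a1 * d1 - a2 * d2 - (c1 * b1 - c2 * b2) = 0) by lra.
  assert (Z2 : a1 * d2 + a2 * d1 - (c1 * b2 + c2 * b1) = 0) by lra.
  assert (H1 : (a1 * d1 - a2 * d2 - (c1 * b1 - c2 * b2)) * (b1*d1 - b2*d2) = 0) by (rewrite Z1; ring).
  assert (H2 : (a1 * d2 + a2 * d1 - (c1 * b2 + c2 * b1)) * (b1*d2 + b2*d1) = 0) by (rewrite Z2; ring).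
  assert (H3 : (a1 * d1 - a2 * d2 - (c1 * b1 - c2 * b2)) * (b1*d2 + b2*d1) = 0) by (rewrite Z1; ring).
  assert (H4 : (a1 * d2 + a2 * d1 - (c1 * b2 + c2 * b1)) * (b1*d1 - b2*d2) = 0) by (rewrite Z2; ring).
  ceq; field_simplify_eq; lra.
Qed.

Lemma bnd_add a b A B : Cnorm a <= A -> Cnorm b <= B -> Cnorm (Cadd a b) <= A + B.
Proof. intros; pose proof (Cnorm_add_le a b); lra. Qed.
Lemma bnd_mul a b A B : Cnorm a <= A -> Cnorm b <= B -> Cnorm (Cmul a b) <= A * B.
Proof. intros; rewrite Cnorm_mul. apply Rmult_le_compat; auto using Cnorm_ge0. Qed.
Lemma bnd_scal x a s A : Rabs x <= s -> Cnorm a <= A -> Cnorm (Cscal x a) <= s * A.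
Proof. intros. rewrite Cnorm_scal. apply Rmult_le_compat; auto using Rabs_pos, Cnorm_ge0. Qed.

Lemma Csqrt_sq v : Cmul (Csqrt v) (Csqrt v) = v.
Proof.
  destruct v as [x y]. unfold Csqrt. set (a := Cnorm (x,y)).
  assert (Ha : Rabs x <= a) by (apply (fst_le_Cnorm (x,y))).
  assert (Ha2 : a * a = x*x + y*y) by (apply (Cnorm_sq (x,y))).
  simpl. pose proof (fst_bounds (x,y) a (Rle_refl a)) as Hb; simpl in Hb.
  assert (H1: 0 <= (a + x)/2) by lra.
  assert (H2: 0 <= (a - x)/2) by lra.
  assert (Hm : sqrt ((a+x)/2) * sqrt ((a-x)/2) = Rabs y / 2).
  { rewrite <- sqrt_mult_alt by lra.
    replace ((a + x) / 2 * ((a - x) / 2)) with (Rsqr (Rabs y / 2)).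
    - apply sqrt_Rsqr. pose proof (Rabs_pos y); lra.
    - unfold Rsqr. replace (Rabs y / 2 * (Rabs y / 2)) with ((Rabs y * Rabs y)/4) by field.
      rewrite <- Rabs_mult, Rabs_right by nra. nra. }
  pose proof (sqrt_sqrt _ H1). pose proof (sqrt_sqrt _ H2).
  unfold Cmul; simpl. apply injective_projections; simpl;
    destruct (Rle_dec 0 y); [| |rewrite Rabs_right in Hm by lra|rewrite Rabs_left in Hm by lra]; nra.
Qed.

Lemma Csqrt_scal k v : 0 < k -> Csqrt (Cscal k v) = Cscal (sqrt k) (Csqrt v).
Proof.
  intros Hk. unfold Csqrt. rewrite Cnorm_scal_pos by lra.
  destruct v as [x y]. set (a := Cnorm (x,y)).
  pose proof (fst_bounds (x,y) a (Rle_refl a)) as [Ha1 Ha2]; simpl in Ha1, Ha2.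
  unfold Cscal; simpl. apply injective_projections; simpl.
  - replace ((k * a + k * x) / 2) with (k * ((a + x)/2)) by field.
    apply sqrt_mult; lra.
  - replace ((k * a - k * x) / 2) with (k * ((a - x)/2)) by field.
    rewrite sqrt_mult by lra.
    destruct (Rle_dec 0 (k*y)), (Rle_dec 0 y); try ring; exfalso; nra.
Qed.

Lemma slit_pos z : slit_plane z -> 0 < Cnorm z - fst z.
Proof.
  intros Hs. pose proof (fst_le_Cnorm z). pose proof (Rle_abs (fst z)).
  destruct (Req_dec (Cnorm z) (fst z)) as [E|E]; [|lra].
  exfalso. apply Hs. pose proof (Cnorm_sq z). rewrite E in H1.
  split; [nra|]. pose proof (Cnorm_ge0 z). lra.
Qed.

Lemma Csqrt_opp_bounds z R d : Cnorm z <= R -> d <= Cnorm z - fst z -> 0 < R ->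
  sqrt (d/2) <= fst (Csqrt (Copp z)) /\ Cnorm (Csqrt (Copp z)) <= R + 1.
Proof.
  intros HR Hd HR0. split.
  - unfold Csqrt. simpl fst. rewrite Cnorm_opp. apply sqrt_le_1_alt. simpl. lra.
  - pose proof (Csqrt_sq (Copp z)) as E. apply (f_equal Cnorm) in E.
    rewrite Cnorm_mul, Cnorm_opp in E.
    pose proof (Cnorm_ge0 (Csqrt (Copp z))). pose proof (Cnorm_ge0 z). nra.
Qed.

(** * Laguerre polynomials as explicit coefficient sequences *)

Fixpoint Csum (f : nat -> Cpx) (m : nat) : Cpx :=
  match m with O => f O | S m' => Cadd (Csum f m') (f (S m')) end.

Definition Cpoly (a : nat -> R) (z : Cpx) (m : nat) : Cpx :=
  Csum (fun k => Cscal (a k) (Cpow z k)) m.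

Definition lag_coef (n : nat) (al : R) (k : nat) : R :=
  binom_na n al * (poch (- INR n) k / (poch (al + 1) k * INR (fact k))).

Lemma Laguerre_Cpoly n al z : Laguerre n al z = Cpoly (lag_coef n al) z n.
Proof.
  unfold Laguerre, hyp1F1_neg, Cpoly.
  assert (E : forall m, Cscal (binom_na n al) (hyp1F1_sum n (al + 1) z m)
              = Csum (fun k => Cscal (lag_coef n al k) (Cpow z k)) m).
  { induction m; simpl; [|rewrite <- IHm]; unfold lag_coef; ceq; ring. }
  apply E.
Qed.

Lemma Cpoly_ext a b z m : (forall k, (k <= m)%nat -> a k = b k) -> Cpoly a z m = Cpoly b z m.
Proof.
  unfold Cpoly; induction m; intros H; simpl.
  - rewrite H by lia. reflexivity.
  - rewrite IHm by (intros; apply H; lia). rewrite H by lia. reflexivity.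
Qed.

Lemma Cpoly_extend a z m j : (forall k, (m < k)%nat -> a k = 0) -> Cpoly a z m = Cpoly a z (m + j).
Proof.
  intros H. induction j.
  - rewrite Nat.add_0_r. reflexivity.
  - rewrite Nat.add_succ_r. unfold Cpoly in *. simpl. rewrite <- IHj. rewrite H by lia.
    ceq; ring.
Qed.

Lemma Cpoly_add a b z m : Cadd (Cpoly a z m) (Cpoly b z m) = Cpoly (fun k => a k + b k) z m.
Proof. unfold Cpoly; induction m; simpl; [|rewrite <- IHm]; ceq; ring. Qed.

Lemma Cpoly_scal c a z m : Cscal c (Cpoly a z m) = Cpoly (fun k => c * a k) z m.
Proof. unfold Cpoly; induction m; simpl; [|rewrite <- IHm]; ceq; ring. Qed.

Lemma Cpoly_opp a z m : Copp (Cpoly a z m) = Cpoly (fun k => - a k) z m.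
Proof. unfold Cpoly; induction m; simpl; [|rewrite <- IHm]; ceq; ring. Qed.

Lemma Cpoly_shift a z m : Cmul z (Cpoly a z m) =
  Cpoly (fun k => match k with O => 0 | S k' => a k' end) z (S m).
Proof.
  unfold Cpoly; induction m.
  - simpl. ceq; ring.
  - change (Csum ?f (S (S m))) with (Cadd (Csum f (S m)) (f (S (S m)))).
    rewrite <- IHm. simpl. ceq; ring.
Qed.

Lemma poch_shift x k : poch x (S k) = x * poch (x + 1) k.
Proof.
  induction k; [simpl; ring|].
  change (poch x (S (S k)) = x * (poch (x + 1) k * (x + 1 + INR k))).
  change (poch x (S (S k))) with (poch x (S k) * (x + INR (S k))).
  rewrite IHk, S_INR. ring.
Qed.

Lemma poch_pos x k : 0 < x -> 0 < poch x k.
Proof. intros H. induction k; simpl; [lra|]. pose proof (pos_INR k). nra. Qed.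

Lemma poch_zero n k : (n < k)%nat -> poch (- INR n) k = 0.
Proof.
  induction k; intros H; [lia|].
  simpl. destruct (Nat.eq_dec n k) as [->|Hne].
  - ring.
  - rewrite IHk by lia. ring.
Qed.

Lemma lag_coef_zero n al k : (n < k)%nat -> lag_coef n al k = 0.
Proof. intros H. unfold lag_coef. rewrite poch_zero by auto. unfold Rdiv. ring. Qed.

Lemma fact_S n : INR (fact (S n)) = INR (S n) * INR (fact n).
Proof. change (fact (S n)) with (S n * fact n)%nat. apply mult_INR. Qed.

Lemma fact_pos n : 0 < INR (fact n).
Proof. apply lt_0_INR. apply lt_O_fact. Qed.

Lemma poch_raise al n : al + 1 <> 0 ->
  poch (al + 1 + 1) n = poch (al + 1) n * (al + 1 + INR n) / (al + 1).
Proof.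
  intros Hal. pose proof (poch_shift (al+1) n) as E. simpl in E.
  field_simplify_eq; auto. lra.
Qed.

(** Coefficient form of [(n+1) L_(n+1)^(al) = (n+1+al) L_n^(al) - z L_n^(al+1)]. *)
Lemma lag_coef_rec_lower al n k : -1 < al ->
  INR (S n) * lag_coef (S n) al k = (INR (S n) + al) * lag_coef n al k -
    (match k with O => 0 | S k' => lag_coef n (al + 1) k' end).
Proof.
  intros Hal. pose proof (fact_pos n). pose proof (pos_INR n).
  unfold lag_coef, binom_na. change (poch (al + 1) (S n)) with (poch (al + 1) n * (al + 1 + INR n)).
  destruct k as [|k'].
  - rewrite fact_S, S_INR. simpl poch. simpl fact. simpl INR. field. lra.
  - pose proof (fact_pos k'). pose proof (pos_INR k').
    assert (0 < poch (al + 1 + 1) k') by (apply poch_pos; lra).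
    rewrite (poch_shift (- INR (S n)) k').
    replace (- INR (S n) + 1) with (- INR n) by (rewrite S_INR; ring).
    change (poch (- INR n) (S k')) with (poch (- INR n) k' * (- INR n + INR k')).
    rewrite !(poch_shift (al+1) k'), !fact_S, (poch_raise al n) by lra.
    rewrite !S_INR. field. repeat split; lra.
Qed.

(** Coefficient form of [(n+1) L_(n+1)^(al+1) = (n+1-z) L_n^(al+1) + (n+1+al) L_n^(al)]. *)
Lemma lag_coef_rec_upper al n k : -1 < al ->
  INR (S n) * lag_coef (S n) (al + 1) k = INR (S n) * lag_coef n (al + 1) k -
    (match k with O => 0 | S k' => lag_coef n (al + 1) k' end) + (INR (S n) + al) * lag_coef n al k.
Proof.
  intros Hal. pose proof (fact_pos n). pose proof (pos_INR n).
  unfold lag_coef, binom_na.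
  change (poch (al + 1 + 1) (S n)) with (poch (al + 1 + 1) n * (al + 1 + 1 + INR n)).
  destruct k as [|k'].
  - rewrite fact_S, S_INR. simpl poch. simpl fact. simpl INR.
    rewrite (poch_raise al n) by lra. field. lra.
  - pose proof (fact_pos k'). pose proof (pos_INR k').
    assert (0 < poch (al + 1 + 1) k') by (apply poch_pos; lra).
    rewrite !(poch_shift (- INR (S n)) k').
    replace (- INR (S n) + 1) with (- INR n) by (rewrite S_INR; ring).
    change (poch (- INR n) (S k')) with (poch (- INR n) k' * (- INR n + INR k')).
    rewrite !(poch_shift (al+1) k').
    change (poch (al + 1 + 1) (S k')) with (poch (al + 1 + 1) k' * (al + 1 + 1 + INR k')).
    rewrite !fact_S, (poch_raise al n) by lra.
    rewrite !S_INR. field. repeat split; lra.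
Qed.

Lemma lag_Cpoly_succ n al z : Cpoly (lag_coef n al) z n = Cpoly (lag_coef n al) z (S n).
Proof.
  rewrite (Cpoly_extend _ z n 1), Nat.add_1_r; auto.
  intros; apply lag_coef_zero; auto.
Qed.

Lemma Laguerre_rec_lower al n z : -1 < al ->
  Cscal (INR (S n)) (Laguerre (S n) al z) =
  Cadd (Cscal (INR (S n) + al) (Laguerre n al z)) (Copp (Cmul z (Laguerre n (al+1) z))).
Proof.
  intros Hal. rewrite !Laguerre_Cpoly, Cpoly_shift, (lag_Cpoly_succ n al).
  rewrite !Cpoly_scal, Cpoly_opp, Cpoly_add. apply Cpoly_ext. intros k _.
  rewrite lag_coef_rec_lower by auto. ring.
Qed.

Lemma Laguerre_rec_upper al n z : -1 < al ->
  Cscal (INR (S n)) (Laguerre (S n) (al+1) z) =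
  Cadd (Cadd (Cscal (INR (S n)) (Laguerre n (al+1) z)) (Copp (Cmul z (Laguerre n (al+1) z))))
       (Cscal (INR (S n) + al) (Laguerre n al z)).
Proof.
  intros Hal. rewrite !Laguerre_Cpoly, Cpoly_shift, (lag_Cpoly_succ n al), (lag_Cpoly_succ n (al+1)).
  rewrite !Cpoly_scal, Cpoly_opp, !Cpoly_add. apply Cpoly_ext. intros k _.
  rewrite lag_coef_rec_upper by auto. ring.
Qed.

Lemma Laguerre_0 al z : Laguerre 0 al z = (1, 0).
Proof. unfold Laguerre, hyp1F1_neg, binom_na. simpl. ceq; field. Qed.

(** * The ratio [r_n = L_n^(al) / L_n^(al+1)] and its recurrence *)

Definition negsq (w : Cpx) : Cpx := Copp (Cmul w w).

(** [re_dot r w = Re (r * conj w)]; [re_dot r w >= 0] says that [r] lies in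
    the closed half-plane facing [w]. *)
Definition re_dot (r w : Cpx) : R := fst r * fst w + snd r * snd w.

(** The denominator of the ratio recurrence at index [N = n+1]. *)
Definition ratio_denom (al : R) (w : Cpx) (N : R) (r : Cpx) : Cpx :=
  Cadd (Csub (RtoC N) (negsq w)) (Cscal (N + al) r).

Definition lag_ratio (al : R) (z : Cpx) (n : nat) : Cpx :=
  Cdiv (Laguerre n al z) (Laguerre n (al+1) z).

(** The Möbius map [r |-> (m r + w^2) / (N + w^2 + m r)] (with [N, m > 0])
    sends the half-plane facing [w] into itself, and its denominator does not
    vanish there: the key invariant making the ratios well defined. *)
Lemma ratio_map_halfplane (N m : R) (w r : Cpx) : 0 < N -> 0 < m -> 0 < fst w -> 0 <= re_dot r w ->
  Cadd (Csub (RtoC N) (negsq w)) (Cscal m r) <> (0,0) /\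
  0 <= re_dot (Cdiv (Csub (Cscal m r) (negsq w)) (Cadd (Csub (RtoC N) (negsq w)) (Cscal m r))) w.
Proof.
  destruct w as [p q], r as [x y]. unfold re_dot, negsq. simpl. intros HN Hm Hp HX.
  set (X := x*p + y*q) in *. set (Y := y*p - x*q). set (W2 := p*p+q*q).
  set (D1 := N - - (p * p - q * q) + m * x). set (D2 := 0 - - (p * q + q * p) + m * y).
  set (n1 := m * x - - (p * p - q * q)). set (n2 := m * y - - (p * q + q * p)).
  (* [E] is the numerator of the real part after clearing [|D|^2]. *)
  set (E := n1 * (D1 * p - D2 * q) + n2 * (D1 * q + D2 * p)).
  assert (HE : W2 * E = m*N*X*W2 + 2*m*p*p*X*W2 + m*m*p*X*X + (N*p + p*p*p)*W2*W2
                        + p*(m*Y + q*W2)*(m*Y+q*W2)).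
  { unfold W2, E, X, Y, D1, D2, n1, n2. ring. }
  assert (HW2 : 0 < W2) by (unfold W2; nra).
  assert (HEp : 0 < E).
  { apply (Rmult_lt_reg_l W2); [lra|]. rewrite Rmult_0_r, HE.
    assert (0 <= m*N*X*W2) by (repeat apply Rmult_le_pos; lra).
    assert (0 <= 2*m*p*p*X*W2) by (repeat apply Rmult_le_pos; lra).
    assert (0 <= m*m*p*X*X) by (repeat apply Rmult_le_pos; lra).
    assert (0 < (N*p + p*p*p)*W2*W2) by (repeat apply Rmult_lt_0_compat; nra).
    assert (0 <= p*(m*Y + q*W2)*(m*Y+q*W2)).
    { rewrite Rmult_assoc. apply Rmult_le_pos; [lra|]. apply Rle_0_sqr. }
    lra. }
  assert (Hd : 0 < D1*D1 + D2*D2).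
  { destruct (Req_dec D1 0), (Req_dec D2 0); try nra.
    exfalso. unfold E in HEp. rewrite H, H0 in HEp. lra. }
  split.
  - apply nz_of_pos. exact Hd.
  - cunfold.
    match goal with |- 0 <= ?g => replace g with (E / (D1*D1+D2*D2)) end.
    + apply Rlt_le. apply Rdiv_lt_0_compat; lra.
    + unfold E, D1, D2, n1, n2. unfold D1, D2 in Hd. field. lra.
Qed.

Lemma Cdiv_mul_cancel c a b : c <> (0,0) -> b <> (0,0) -> Cdiv (Cmul c a) (Cmul c b) = Cdiv a b.
Proof. intros Hc Hb. apply div_eq; [apply mul_nz; auto|auto|ceq; ring]. Qed.

Lemma lag_ratio_step al w n : -1 < al -> 0 < fst w ->
  let z := negsq w in let r := lag_ratio al z in
  Laguerre n (al+1) z <> (0,0) -> 0 <= re_dot (r n) w ->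
  Laguerre (S n) (al+1) z <> (0,0) /\ 0 <= re_dot (r (S n)) w /\
  ratio_denom al w (INR (S n)) (r n) <> (0,0) /\
  Cmul (r (S n)) (ratio_denom al w (INR (S n)) (r n)) = Csub (Cscal (INR (S n) + al) (r n)) z.
Proof.
  intros Hal Hw z r HP Hr.
  assert (HN : 0 < INR (S n)) by (apply lt_0_INR; lia).
  assert (Hm : 0 < INR (S n) + al) by (rewrite S_INR; pose proof (pos_INR n); lra).
  destruct (ratio_map_halfplane (INR (S n)) (INR (S n) + al) w (r n) HN Hm Hw Hr) as [HD HF].
  set (D := ratio_denom al w (INR (S n)) (r n)) in *.
  set (X := Csub (Cscal (INR (S n) + al) (r n)) z) in *.
  set (P := Laguerre n (al+1) z) in *.
  assert (HA : Laguerre n al z = Cmul (r n) P) by (unfold r, lag_ratio; rewrite div_mul; auto).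
  assert (E1 : Cscal (INR (S n)) (Laguerre (S n) al z) = Cmul P X).
  { rewrite Laguerre_rec_lower, HA by auto. fold P. unfold X. ceq; ring. }
  assert (E2 : Cscal (INR (S n)) (Laguerre (S n) (al+1) z) = Cmul P D).
  { rewrite Laguerre_rec_upper, HA by auto. fold P. unfold D, ratio_denom. fold z. ceq; ring. }
  assert (HPS : Laguerre (S n) (al+1) z <> (0,0)).
  { intro E. apply (mul_nz P D HP HD). rewrite <- E2, E. ceq; ring. }
  assert (Hrr : r (S n) = Cdiv X D).
  { rewrite <- (Cdiv_mul_cancel P X D), <- E1 by auto. unfold r, lag_ratio.
    apply div_eq; [exact HPS|apply mul_nz; auto|rewrite <- E2; ceq; ring]. }
  repeat split; auto.
  - rewrite Hrr. exact HF.
  - rewrite Hrr, div_mul; auto.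
Qed.

Lemma lag_ratio_recurrence al w : -1 < al -> 0 < fst w ->
  let r := lag_ratio al (negsq w) in
  forall n, 0 <= re_dot (r n) w /\ ratio_denom al w (INR (S n)) (r n) <> (0,0) /\
    Cmul (r (S n)) (ratio_denom al w (INR (S n)) (r n))
      = Csub (Cscal (INR (S n) + al) (r n)) (negsq w).
Proof.
  intros Hal Hw r.
  assert (Hinv : forall n, Laguerre n (al+1) (negsq w) <> (0,0) /\ 0 <= re_dot (r n) w).
  { induction n as [|n [HP Hr]].
    - unfold r, lag_ratio. rewrite !Laguerre_0. split.
      + intro E. injection E. lra.
      + unfold re_dot, Cdiv, Cmul, Cinv; simpl. field_simplify; lra.
    - destruct (lag_ratio_step al w n Hal Hw HP Hr) as [? [? _]]. auto. }
  intro n. destruct (Hinv n) as [HP Hr].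
  destruct (lag_ratio_step al w n Hal Hw HP Hr) as [_ [_ ?]]. split; auto.
Qed.

Lemma nat_arch x : exists n : nat, x < INR n.
Proof. destruct (INR_archimed 1 x Rlt_0_1) as [n Hn]. exists n. lra. Qed.

(** The sets [{z : |z| < k, |z| - Re z > 1/(k+1)}] form an open exhaustion of the slit plane. *)
Definition slit_exhaustion (k : nat) (z : Cpx) : Prop :=
  Cnorm z < INR k /\ / (INR k + 1) < Cnorm z - fst z.

Lemma slit_exhaustion_open k : Copen (slit_exhaustion k).
Proof.
  intros z [H1 H2]. set (eps := Rmin (INR k - Cnorm z) ((Cnorm z - fst z - / (INR k + 1))/2)).
  exists eps. split; [apply Rmin_glb_lt; lra|].
  intros w' Hw'. pose proof (Rmin_l (INR k - Cnorm z) ((Cnorm z - fst z - / (INR k + 1))/2)) as Hl.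
  pose proof (Rmin_r (INR k - Cnorm z) ((Cnorm z - fst z - / (INR k + 1))/2)) as Hr.
  fold eps in Hl, Hr.
  pose proof (Cnorm_sub_rev w' z). pose proof (Cnorm_sub_rev z w') as Hrev.
  rewrite Cnorm_sub_sym in Hrev.
  pose proof (fst_bounds (Csub w' z) _ (Rle_refl _)) as H5. simpl in H5.
  split; lra.
Qed.

Lemma slit_exhaustion_covers z : slit_plane z -> exists k, slit_exhaustion k z.
Proof.
  intros Hs. pose proof (slit_pos z Hs) as Hg.
  destruct (nat_arch (Cnorm z + / (Cnorm z - fst z))) as [k Hk].
  exists k. pose proof (Cnorm_ge0 z).
  assert (0 < / (Cnorm z - fst z)) by (apply Rinv_0_lt_compat; lra).
  split; [lra|].
  rewrite <- (Rinv_inv (Cnorm z - fst z)). apply Rinv_lt_contravar; [|lra].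
  apply Rmult_lt_0_compat; [auto|]. pose proof (pos_INR k); lra.
Qed.

Lemma fold_max_ge (l : list nat) i : In i l -> (i <= fold_right Nat.max 0 l)%nat.
Proof. induction l; simpl; [tauto|]. intros [->|H]; [lia|]. specialize (IHl H). lia. Qed.

Lemma compact_bounds K : (forall z, K z -> slit_plane z) -> Ccompact K ->
  exists R d, 0 < R /\ 0 < d /\ forall z, K z -> Cnorm z <= R /\ d <= Cnorm z - fst z.
Proof.
  intros Hs Hc.
  destruct (Hc nat slit_exhaustion slit_exhaustion_open
              (fun z Hz => slit_exhaustion_covers z (Hs z Hz))) as [l Hl].
  set (k0 := fold_right Nat.max 0%nat l).
  exists (INR k0 + 1), (/ (INR k0 + 1)). pose proof (pos_INR k0).
  split; [lra|]. split; [apply Rinv_0_lt_compat; lra|].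
  intros z Hz. destruct (Hl z Hz) as [i [Hi [U1 U2]]].
  pose proof (fold_max_ge l i Hi) as Hle. apply le_INR in Hle. fold k0 in Hle.
  split; [lra|].
  apply Rlt_le. eapply Rle_lt_trans; [|exact U2].
  apply Rinv_le_contravar; [pose proof (pos_INR i)|]; lra.
Qed.

(** * Stage 1: [sqrt n r_n] approaches [w] in the pseudo-hyperbolic metric

    The quantity [mobius_dist w a r = |a r - w| / |a r + w|] measures the
    distance of [a r] from [w] inside the half-plane facing [w]; it lies in
    [0, 1] and is small exactly when [a r] is close to [w]. *)

Definition mobius_dist (w : Cpx) (a : R) (r : Cpx) : R :=
  Cnorm (Csub (Cscal a r) w) / Cnorm (Cadd (Cscal a r) w).

Lemma mobius_dist_bounds b w r : 0 < b -> 0 < fst w -> 0 <= re_dot r w ->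
  0 < Cnorm (Cadd (Cscal b r) w) /\ Cnorm (Csub (Cscal b r) w) <= Cnorm (Cadd (Cscal b r) w).
Proof.
  intros Hb Hw Hre. unfold re_dot in Hre.
  assert (0 <= b * (fst r * fst w + snd r * snd w)) by (apply Rmult_le_pos; lra).
  split.
  - apply Cnorm_pos. intro E0.
    pose proof (f_equal fst E0) as E1. pose proof (f_equal snd E0) as E2.
    destruct w as [p q], r as [x y]. unfold Cadd, Cscal in *; simpl in *. nra.
  - apply Rsqr_incr_0_var; [|apply Cnorm_ge0]. unfold Rsqr. rewrite !Cnorm_sq.
    destruct w as [p q], r as [x y]. unfold Csub, Cadd, Copp, Cscal; simpl in *. nra.
Qed.

Lemma mobius_dist_01 b w r : 0 < b -> 0 < fst w -> 0 <= re_dot r w -> 0 <= mobius_dist w b r <= 1.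
Proof.
  intros Hb Hw Hre. destruct (mobius_dist_bounds b w r Hb Hw Hre) as [HQ HPQ].
  unfold mobius_dist. split.
  - apply Rmult_le_pos; [apply Cnorm_ge0|apply Rlt_le, Rinv_0_lt_compat; lra].
  - apply Rmult_le_reg_r with (Cnorm (Cadd (Cscal b r) w)); [exact HQ|].
    unfold Rdiv. rewrite Rmult_assoc, Rinv_l by lra. lra.
Qed.

Lemma mobius_dist_small w a r dl Wb : 0 < a -> 0 <= dl -> dl <= 1/2 -> Cnorm w <= Wb ->
  Cnorm (Csub (Cscal a r) w) <= dl * Cnorm (Cadd (Cscal a r) w) ->
  Cnorm (Csub (Cscal a r) w) <= 4*dl*Wb.
Proof.
  intros Ha Hd Hd2 Hw H.
  set (X := Csub (Cscal a r) w) in *.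
  replace (Cadd (Cscal a r) w) with (Cadd X (Cscal 2 w)) in H by (unfold X; ceq; ring).
  pose proof (Cnorm_add_le X (Cscal 2 w)). rewrite Cnorm_scal, Rabs_right in H0 by lra.
  pose proof (Cnorm_ge0 X). pose proof (Cnorm_ge0 w).
  assert (Cnorm X <= dl * (Cnorm X + 2 * Cnorm w))
    by (eapply Rle_trans; [exact H|]; apply Rmult_le_compat_l; lra).
  assert (Cnorm X * (1 - dl) <= 2*dl*Wb) by nra.
  assert (Cnorm X * (1/2) <= Cnorm X * (1 - dl)) by (apply Rmult_le_compat_l; lra).
  nra.
Qed.

Lemma mobius_dist_mul w a r D : D <> (0,0) ->
  mobius_dist w a r = Cnorm (Cmul (Csub (Cscal a r) w) D) / Cnorm (Cmul (Cadd (Cscal a r) w) D).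
Proof.
  intros HD. pose proof (Cnorm_pos D HD). unfold mobius_dist. rewrite !Cnorm_mul.
  destruct (Req_dec (Cnorm (Cadd (Cscal a r) w)) 0) as [Z|Z].
  - rewrite Z, Rmult_0_l. unfold Rdiv. rewrite !Rinv_0, !Rmult_0_r. reflexivity.
  - field. lra.
Qed.

Lemma mobius_factor_bound w a om Wb : 0 < om -> om <= fst w -> Cnorm w <= Wb -> Wb <= a ->
  Cnorm (Csub (RtoC a) w) <= (1 - om/a/2) * Cnorm (Cadd (RtoC a) w).
Proof.
  intros Hom Hf Hw Ha.
  pose proof (fst_bounds w _ (Rle_refl (Cnorm w))) as Hp.
  assert (Ha0 : 0 < a) by lra.
  assert (Hx : om / a <= 1) by (apply Rmult_le_reg_r with a; [lra|]; field_simplify; lra).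
  assert (Hx0 : 0 < om / a) by (apply Rdiv_lt_0_compat; lra).
  apply Rsqr_incr_0_var; [|apply Rmult_le_pos; [lra|apply Cnorm_ge0]].
  unfold Rsqr. replace ((1 - om/a/2) * Cnorm (Cadd (RtoC a) w) * ((1 - om/a/2) * Cnorm (Cadd (RtoC a) w)))
    with ((1 - om/a/2)*(1 - om/a/2) * (Cnorm (Cadd (RtoC a) w) * Cnorm (Cadd (RtoC a) w))) by ring.
  pose proof (Cnorm_sq w) as Sw.
  rewrite !Cnorm_sq. destruct w as [p q]. unfold Csub, Cadd, Copp, RtoC in *; simpl in *.
  set (x := om/a) in *.
  assert (Hxa : x * a = om) by (unfold x; field; lra).
  assert (Hs : a*a + (p*p+q*q) <= 2*(a*a)) by nra.
  assert (H1 : x * (a*a + (p*p+q*q) + 2*a*p) <= 4*a*p).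
  { assert (x*(a*a + (p*p+q*q) + 2*a*p) <= x*(4*(a*a))) by (apply Rmult_le_compat_l; nra).
    assert (x*(4*(a*a)) = 4*a*om) by (rewrite <- Hxa; ring).
    assert (4*a*om <= 4*a*p) by nra. lra. }
  assert (0 <= x*x/4*((a + p)*(a+p) + q*q)) by (apply Rmult_le_pos; nra).
  nra.
Qed.

Definition mobius_const (al Wb : R) : R :=
  2 + 2*Rabs al + 2*(Wb*Wb) + 2*Rabs al*(Wb*Wb) + Wb*Wb*Wb.

(** The scale [l = a/b = sqrt((n+1)/n)] satisfies [1 <= l <= 2] and
    [(l - 1) a^2 <= 2] once [a^2 >= 2]. *)
Lemma scale_ratio_bounds a b : 0 < a -> 0 < b -> a*a = b*b+1 -> 2 <= a*a ->
  1 <= a / b <= 2 /\ (a / b - 1) * (a*a) <= 2.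
Proof.
  intros Ha Hb Hab Ha2. set (l := a / b).
  assert (Hl2 : l*l*(a*a - 1) = a*a) by (unfold l; replace (a*a - 1) with (b*b) by lra; field; lra).
  assert (Hl0 : 0 < l) by (unfold l; apply Rdiv_lt_0_compat; lra).
  assert (Hl1 : 1 <= l).
  { destruct (Rle_lt_dec 1 l) as [?|Hlt]; auto. exfalso. assert (l*l < 1) by nra.
    assert (l*l*(a*a-1) <= 1*(a*a-1)) by (apply Rmult_le_compat_r; lra). lra. }
  assert (Hll : l*l <= 2).
  { destruct (Rle_lt_dec (l*l) 2) as [?|Hlt]; auto. exfalso.
    assert (2*(a*a-1) < l*l*(a*a-1)) by (apply Rmult_lt_compat_r; lra). lra. }
  repeat split; nra.
Qed.

Lemma mobius_const_nonneg al Wb : 0 <= Wb -> 0 <= mobius_const al Wb.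
Proof. intros HWb. unfold mobius_const. pose proof (Rabs_pos al). nra. Qed.

(** In the stage-1 identities below, the leading coefficient [K = (m/b)(a^2 - w^2)]
    equals [S = a^3] up to [O(a)], and the cubic term [w^3] is [O(1)]. *)
Lemma mobius_perturbation_bound al Wb w a b : 0 < a -> 0 < b -> a*a = b*b+1 -> 2 <= a*a -> 1 <= a ->
  Cnorm w <= Wb ->
  Cnorm (Csub (Cscal ((a*a+al)/b) (Csub (RtoC (a*a)) (Cmul w w))) (RtoC (a*a*a)))
    + Cnorm (Cmul w (Cmul w w)) <= mobius_const al Wb * a.
Proof.
  intros Ha Hb Hab Ha2 Ha1 Hw.
  destruct (scale_ratio_bounds a b Ha Hb Hab Ha2) as [[Hl1 Hl2] Hlm]. set (l := a / b) in *.
  assert (Id : Csub (Cscal ((a*a+al)/b) (Csub (RtoC (a*a)) (Cmul w w))) (RtoC (a*a*a)) =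
     Cscal (/a) (Cadd (RtoC (a*a*a*a*(l-1) + al*l*(a*a))) (Cscal (-((a*a+al)*l)) (Cmul w w)))).
  { unfold l. destruct w as [p q]. ceq; field; lra. }
  rewrite Id, Cnorm_scal, Rabs_right by (apply Rle_ge, Rlt_le, Rinv_0_lt_compat; lra).
  pose proof (Cnorm_ge0 w). pose proof (Rabs_pos al) as Hal.
  assert (Hww : Cnorm (Cmul w w) <= Wb*Wb) by (apply bnd_mul; auto).
  assert (Hw3 : Cnorm (Cmul w (Cmul w w)) <= Wb*(Wb*Wb)) by (apply bnd_mul; auto).
  assert (A1 : Rabs (a*a*a*a*(l-1) + al*l*(a*a)) <= a*a*2 + Rabs al * 2 * (a*a)).
  { eapply Rle_trans; [apply Rabs_triang|]. rewrite Rabs_right by nra.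
    rewrite !Rabs_mult, (Rabs_right l), (Rabs_right a) by lra.
    assert ((a*a)*((l-1)*(a*a)) <= a*a*2) by (apply Rmult_le_compat_l; nra).
    assert (Rabs al * (a*a) * l <= Rabs al * (a*a) * 2) by (apply Rmult_le_compat_l; nra).
    nra. }
  assert (A2 : Rabs (-((a*a+al)*l)) <= (a*a + Rabs al*(a*a))*2).
  { rewrite Rabs_Ropp, Rabs_mult, (Rabs_right l) by lra.
    assert (Rabs (a*a+al) <= a*a + Rabs al*(a*a)).
    { eapply Rle_trans; [apply Rabs_triang|]. rewrite Rabs_right by nra.
      assert (Rabs al <= Rabs al * (a*a)) by nra. lra. }
    apply Rmult_le_compat; auto using Rabs_pos; lra. }
  assert (Hin : Cnorm (Cadd (RtoC (a*a*a*a*(l-1) + al*l*(a*a))) (Cscal (-((a*a+al)*l)) (Cmul w w)))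
     <= a*a*(2 + 2*Rabs al + 2*(Wb*Wb) + 2*Rabs al*(Wb*Wb))).
  { eapply Rle_trans; [apply bnd_add; [rewrite Cnorm_RtoC; exact A1|apply bnd_scal; eauto]|].
    apply Req_le. ring. }
  apply Rmult_le_compat_l with (r := / a) in Hin; [|apply Rlt_le, Rinv_0_lt_compat; lra].
  replace (/a * (a*a*(2 + 2*Rabs al + 2*(Wb*Wb) + 2*Rabs al*(Wb*Wb)))) with
     (a*(2 + 2*Rabs al + 2*(Wb*Wb) + 2*Rabs al*(Wb*Wb))) in Hin by (field; lra).
  unfold mobius_const.
  assert (Wb*(Wb*Wb) <= Wb*Wb*Wb*a) by (assert (0 <= Wb*Wb*Wb) by nra; nra).
  nra.
Qed.

Lemma combination_bounds (A1 A2 num den K w3 p q : Cpx) (S E : R) :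
  0 <= S -> Cnorm (Csub K (RtoC S)) + Cnorm w3 <= E ->
  Cmul A1 num = Cadd (Cmul (Cadd (Cadd K (RtoC S)) w3) p) (Cmul (Csub (Csub K (RtoC S)) w3) q) ->
  Cmul A2 den = Cadd (Cmul (Cadd (Csub K (RtoC S)) w3) p) (Cmul (Csub (Cadd K (RtoC S)) w3) q) ->
  Cnorm A1 * Cnorm num <= (2*S + E) * Cnorm p + E * Cnorm q /\
  (2*S - E) * Cnorm q - E * Cnorm p <= Cnorm A2 * Cnorm den.
Proof.
  intros HS HE E1 E2. set (dK := Csub K (RtoC S)) in *.
  pose proof (Cnorm_ge0 p). pose proof (Cnorm_ge0 q).
  assert (Hsmall : Cnorm (Cadd dK w3) <= E /\ Cnorm (Csub dK w3) <= E).
  { pose proof (Cnorm_add_le dK w3). pose proof (Cnorm_sub_le dK w3). lra. }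
  split.
  - rewrite <- Cnorm_mul, E1.
    replace (Cadd (Cadd K (RtoC S)) w3) with (Cadd (RtoC (2*S)) (Cadd dK w3)) by (unfold dK; ceq; ring).
    replace (Csub (Csub K (RtoC S)) w3) with (Csub dK w3) by (unfold dK; ceq; ring).
    apply bnd_add; apply bnd_mul; try apply Rle_refl; try tauto.
    eapply Rle_trans; [apply Cnorm_add_le|]. rewrite Cnorm_RtoC, Rabs_right by lra. lra.
  - rewrite <- Cnorm_mul, E2.
    replace (Csub (Cadd K (RtoC S)) w3) with (Csub (RtoC (2*S)) (Copp (Csub dK w3)))
      by (unfold dK; ceq; ring).
    replace (Cadd (Csub K (RtoC S)) w3) with (Cadd dK w3) by (unfold dK; ceq; ring).
    pose proof (Cnorm_sub_rev (RtoC (2*S)) (Copp (Csub dK w3))) as Hlow.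
    rewrite Cnorm_RtoC, Cnorm_opp, Rabs_right in Hlow by lra.
    pose proof (Cnorm_add_rev (Cmul (Csub (RtoC (2 * S)) (Copp (Csub dK w3))) q) (Cmul (Cadd dK w3) p)).
    rewrite !Cnorm_mul in *.
    replace (Cadd (Cmul (Cadd dK w3) p) (Cmul (Csub (RtoC (2 * S)) (Copp (Csub dK w3))) q))
      with (Cadd (Cmul (Csub (RtoC (2 * S)) (Copp (Csub dK w3))) q) (Cmul (Cadd dK w3) p)) by (ceq; ring).
    assert ((2*S - E) * Cnorm q <= Cnorm (Csub (RtoC (2 * S)) (Copp (Csub dK w3))) * Cnorm q)
      by (apply Rmult_le_compat_r; lra).
    assert (Cnorm (Cadd dK w3) * Cnorm p <= E * Cnorm p) by (apply Rmult_le_compat_r; lra).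
    lra.
Qed.

(** The real inequality behind one stage-1 step: if [X/Y] is controlled by
    [P/Q] through the estimates of [combination_bounds], with a contraction
    factor [a2/a1 <= 1 - x/2] and relative perturbation [e <= x/8], then
    [X/Y <= (1 - x/4) P/Q + 2e]. *)
Lemma ratio_contraction P Q a1 a2 X Y S E e x :
  0 < Q -> 0 <= P -> P <= Q -> 0 < a1 -> 0 <= a2 -> 0 <= X -> 0 <= Y -> 0 < S ->
  0 <= E -> E <= e * S -> 0 <= e -> e <= 1/4 -> 0 < x -> x <= 1 -> e <= x/8 ->
  2*a1*X <= (2*S+E)*P + E*Q -> (2*S - E)*Q - E*P <= 2*a2*Y -> a2 <= (1 - x/2)*a1 ->
  X / Y <= (1 - x/4) * (P / Q) + 2*e.
Proof.
  intros HQ HP HPQ Ha1 Ha2 HX HY HS HE HEe He He4 Hx Hx1 Hex H1 H2 H3.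
  set (lam := 1 - x/2) in *. set (T := (1 - x/4)*P + 2*e*Q).
  assert (HC : lam*((2+e)*P + e*Q) <= 2*(1-e)*T).
  { unfold lam, T.
    assert (((1 - x/2)*(2+e) - 2*(1-e)*(1-x/4))*P <= 0) by (rewrite <- (Rmult_0_l P); apply Rmult_le_compat_r; nra).
    assert ((1 - x/2)*e*Q <= 2*(1-e)*(2*e)*Q) by (apply Rmult_le_compat_r; nra).
    nra. }
  assert (HA : 2*a1*X <= S*((2+e)*P + e*Q)).
  { assert (E*P <= e*S*P) by (apply Rmult_le_compat_r; lra).
    assert (E*Q <= e*S*Q) by (apply Rmult_le_compat_r; lra). nra. }
  assert (HB : 2*S*(1-e)*Q <= 2*lam*a1*Y).
  { assert (E*Q <= e*S*Q) by (apply Rmult_le_compat_r; lra).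
    assert (E*P <= e*S*Q) by (apply Rle_trans with (E*Q); [apply Rmult_le_compat_l|]; lra).
    assert (2*a2*Y <= 2*(lam*a1)*Y) by (apply Rmult_le_compat_r; lra). nra. }
  assert (HSQ : 0 < 2*S*(1-e)*Q) by (repeat apply Rmult_lt_0_compat; lra).
  assert (HYp : 0 < Y) by (destruct (Req_dec Y 0) as [E0|E0]; [rewrite E0, Rmult_0_r in HB; lra|lra]).
  (* Multiply [HA] by [HB] and use [HC] to get [X Q <= T Y]. *)
  assert (HXQ : 4*a1*S*(1-e) * (X*Q) <= 4*a1*S*(1-e) * (T*Y)).
  { assert (2*a1*X*(2*S*(1-e)*Q) <= S*((2+e)*P + e*Q)*(2*lam*a1*Y))
      by (apply Rmult_le_compat; [repeat apply Rmult_le_pos; lra|lra|exact HA|exact HB]).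
    assert (2*a1*S*Y*(lam*((2+e)*P + e*Q)) <= 2*a1*S*Y*(2*(1-e)*T))
      by (apply Rmult_le_compat_l; [repeat apply Rmult_le_pos; lra|exact HC]).
    lra. }
  apply Rmult_le_reg_l in HXQ; [|repeat apply Rmult_lt_0_compat; lra].
  apply Rmult_le_reg_r with (Y*Q); [nra|].
  replace (X / Y * (Y * Q)) with (X*Q) by (field; lra).
  replace (((1 - x / 4) * (P / Q) + 2 * e) * (Y * Q)) with (T*Y) by (unfold T; field; lra).
  exact HXQ.
Qed.

(** The algebraic heart of stage 1. Write [X = m r' - z], [D = D_n(r')],
    [p = b r' - w], [q = b r' + w], [K = (m/b)(a^2 - w^2)], [S = a^3].
    Then [a X -+ w D] (which equal [(a r_(n+1) -+ w) D]) are explicit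
    combinations of [p] and [q]. *)
Lemma mobius_identities al w a b r' : 0 < a -> 0 < b -> a*a = b*b+1 ->
  let m := a*a + al in let D := ratio_denom al w (a*a) r' in
  let X := Csub (Cscal m r') (negsq w) in
  let p := Csub (Cscal b r') w in let q := Cadd (Cscal b r') w in
  let K := Cscal (m/b) (Csub (RtoC (a*a)) (Cmul w w)) in
  let S := a*a*a in let w3 := Cmul w (Cmul w w) in
  Cmul (Cscal 2 (Cadd (RtoC a) w)) (Csub (Cscal a X) (Cmul w D)) =
    Cadd (Cmul (Cadd (Cadd K (RtoC S)) w3) p) (Cmul (Csub (Csub K (RtoC S)) w3) q) /\
  Cmul (Cscal 2 (Csub (RtoC a) w)) (Cadd (Cscal a X) (Cmul w D)) =
    Cadd (Cmul (Cadd (Csub K (RtoC S)) w3) p) (Cmul (Csub (Cadd K (RtoC S)) w3) q).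
Proof.
  intros Ha Hb Hab. cbv zeta. unfold ratio_denom, negsq.
  destruct w as [u v], r' as [x y]. split; ceq; field; lra.
Qed.

(** One step of stage 1: [d_(n+1) <= (1 - om/(4 sqrt(n+1))) d_n + 2 C/(n+1)]
    for the pseudo-hyperbolic distance [d_n = mobius_dist w (sqrt n) r_n]. *)
Lemma mobius_step al Wb om w a b r' rN :
  0 < om -> om <= fst w -> Cnorm w <= Wb -> 0 < a -> 0 < b -> a*a = b*b+1 ->
  Wb <= a -> 2 <= a*a -> 4 * mobius_const al Wb <= a*a -> 8 * mobius_const al Wb <= om * a ->
  0 <= re_dot r' w -> ratio_denom al w (a*a) r' <> (0,0) ->
  Cmul rN (ratio_denom al w (a*a) r') = Csub (Cscal (a*a + al) r') (negsq w) ->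
  mobius_dist w a rN <= (1 - om/a/4) * mobius_dist w b r' + 2 * (mobius_const al Wb / (a*a)).
Proof.
  intros Hom Hf Hw Ha Hb Hab HaW Ha2 HC4 HC8 Hre HD HrN.
  destruct (mobius_identities al w a b r' Ha Hb Hab) as [In Id]. cbv zeta in In, Id.
  pose proof (mobius_perturbation_bound al Wb w a b Ha Hb Hab Ha2 ltac:(nra) Hw) as HKS.
  set (D := ratio_denom al w (a*a) r') in *.
  set (X := Csub (Cscal (a*a + al) r') (negsq w)) in *.
  set (num := Csub (Cscal a X) (Cmul w D)) in *. set (den := Cadd (Cscal a X) (Cmul w D)) in *.
  set (C0 := mobius_const al Wb) in *. set (E := C0 * a) in *. set (S := a*a*a) in *.
  assert (HS : 0 < S) by (unfold S; repeat apply Rmult_lt_0_compat; lra).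
  destruct (combination_bounds _ _ num den _ _ _ _ S E ltac:(lra) HKS In Id) as [Hn1 Hn2].
  rewrite !Cnorm_scal, Rabs_right in Hn1, Hn2 by lra.
  destruct (mobius_dist_bounds b w r' Hb ltac:(lra) Hre) as [HQ HPQ].
  pose proof (mobius_factor_bound w a om Wb Hom Hf Hw HaW) as Hlam.
  assert (Hrat : mobius_dist w a rN = Cnorm num / Cnorm den).
  { rewrite (mobius_dist_mul w a rN D HD). f_equal; f_equal;
      [unfold num|unfold den]; rewrite <- HrN; ceq; ring. }
  rewrite Hrat. unfold mobius_dist.
  assert (HC0 : 0 <= C0) by (apply mobius_const_nonneg; pose proof (Cnorm_ge0 w); lra).
  assert (Ha1' : 0 < Cnorm (Cadd (RtoC a) w)).
  { pose proof (fst_bounds _ _ (Rle_refl (Cnorm (Cadd (RtoC a) w)))) as Hb'.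
    simpl in Hb'. lra. }
  assert (Hw1 : om <= a) by (pose proof (fst_bounds w Wb Hw); lra).
  apply (ratio_contraction (Cnorm (Csub (Cscal b r') w)) (Cnorm (Cadd (Cscal b r') w))
    (Cnorm (Cadd (RtoC a) w)) (Cnorm (Csub (RtoC a) w)) (Cnorm num) (Cnorm den) S E);
    auto using Cnorm_ge0; try lra.
  - unfold E. apply Rmult_le_pos; lra.
  - unfold E, S. apply Req_le. field. lra.
  - apply Rmult_le_pos; [lra|apply Rlt_le, Rinv_0_lt_compat; nra].
  - apply Rmult_le_reg_r with (a*a); [nra|]. unfold Rdiv. rewrite Rmult_assoc, Rinv_l; nra.
  - apply Rdiv_lt_0_compat; lra.
  - apply Rmult_le_reg_r with a; [lra|]. unfold Rdiv. rewrite Rmult_assoc, Rinv_l; lra.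
  - apply Rmult_le_reg_r with (8*(a*a)); [nra|].
    replace (C0 / (a*a) * (8*(a*a))) with (8 * C0) by (field; lra).
    replace (om/a/8*(8*(a*a))) with (om*a) by (field; lra). lra.
Qed.

(** * The two-term approximation and its residual *)

Definition second_coef (al : R) (w : Cpx) : Cpx :=
  Cadd (RtoC (al/2 + 1/4)) (Cscal (1/2) (negsq w)).

(** The approximation [u w + u^2 c] of [r_n], where [u = 1/sqrt n]. *)
Definition approx (al : R) (w : Cpx) (u : R) : Cpx :=
  Cadd (Cscal u w) (Cscal (u*u) (second_coef al w)).

Definition coef_bound (al Wb : R) : R := Rabs al + 1 + Wb * Wb.

Lemma coef_bound_ge1 al Wb : 1 <= coef_bound al Wb.
Proof. unfold coef_bound. pose proof (Rabs_pos al). nra. Qed.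

Lemma norm_negsq w : Cnorm (negsq w) = Cnorm w * Cnorm w.
Proof. unfold negsq. rewrite Cnorm_opp, Cnorm_mul. reflexivity. Qed.

Lemma norm_negsq_le w Wb : Cnorm w <= Wb -> Cnorm (negsq w) <= Wb * Wb.
Proof. intros. rewrite norm_negsq. pose proof (Cnorm_ge0 w). nra. Qed.

Lemma norm_second_coef al w Wb : Cnorm w <= Wb -> Cnorm (second_coef al w) <= coef_bound al Wb.
Proof.
  intros Hw. unfold second_coef, coef_bound. eapply Rle_trans; [apply Cnorm_add_le|].
  rewrite Cnorm_RtoC, Cnorm_scal, (Rabs_right (1/2)) by lra.
  pose proof (norm_negsq_le w Wb Hw).
  assert (Rabs (al/2 + 1/4) <= Rabs al + 1).
  { eapply Rle_trans; [apply Rabs_triang|]. rewrite (Rabs_right (1/4)) by lra.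
    unfold Rdiv. rewrite Rabs_mult, (Rabs_right (/2)) by lra. pose proof (Rabs_pos al). lra. }
  pose proof (Cnorm_ge0 (negsq w)). lra.
Qed.

Lemma norm_approx al w Wb u : 0 <= u -> u <= 1 -> Cnorm w <= Wb ->
  Cnorm (approx al w u) <= (Wb + coef_bound al Wb) * u.
Proof.
  intros Hu Hu1 Hw. unfold approx. eapply Rle_trans; [apply Cnorm_add_le|].
  rewrite !Cnorm_scal, (Rabs_right u), (Rabs_right (u*u)) by nra.
  pose proof (norm_second_coef al w Wb Hw). pose proof (coef_bound_ge1 al Wb).
  assert (u * Cnorm w <= u * Wb) by (apply Rmult_le_compat_l; lra).
  assert (u * u * Cnorm (second_coef al w) <= u * u * coef_bound al Wb) by (apply Rmult_le_compat_l; nra).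
  assert (u * u * coef_bound al Wb <= u * coef_bound al Wb) by (apply Rmult_le_compat_r; nra).
  lra.
Qed.

Lemma fst_approx al w u : fst (approx al w u) = u * fst w + u*u * fst (second_coef al w).
Proof. unfold approx, Cadd, Cscal. simpl. ring. Qed.

Lemma fst_approx_lower al w Wb om u : 0 <= u -> om <= fst w -> Cnorm w <= Wb ->
  u * om - u * u * coef_bound al Wb <= fst (approx al w u).
Proof.
  intros Hu Hom Hw. rewrite fst_approx.
  pose proof (fst_bounds _ _ (norm_second_coef al w Wb Hw)).
  assert (u * om <= u * fst w) by (apply Rmult_le_compat_l; lra).
  assert (u*u*(- coef_bound al Wb) <= u*u*fst (second_coef al w)) by (apply Rmult_le_compat_l; nra).
  lra.
Qed.

(** With [u = 1/sqrt(n+1)] and [v = 1/sqrt n], i.e. [v^2 (1 - u^2) = u^2],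
    [v - u = u^3/2 + O(u^4)]. *)
Lemma inv_sqrt_step u v : 0 < u -> u <= 1/2 -> 0 < v -> v * v * (1 - u * u) = u * u ->
  u <= v /\ v <= 2 * u /\ u*u*u/2 <= v - u /\ v - u <= u*u*u/2 + u*u*u*u.
Proof.
  intros Hu Hu2 Hv E.
  assert (Hp : 0 < 1 - u*u) by nra.
  assert (H1 : u * (1 + u*u/2) <= v).
  { apply Rsqr_incr_0_var; [|lra]. unfold Rsqr. apply Rmult_le_reg_r with (1 - u*u); [lra|].
    rewrite E. assert (0 <= u*u*u*u*(3/4 + u*u/4)) by (repeat apply Rmult_le_pos; nra). nra. }
  assert (H2 : v <= u * (1 + u*u/2 + u*u*u)).
  { apply Rsqr_incr_0_var; [|nra]. unfold Rsqr. apply Rmult_le_reg_r with (1 - u*u); [lra|].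
    rewrite E. set (s := u*u/2+u*u*u).
    assert (0 <= u*u*u*(2 - u - 2*u*u)) by (repeat apply Rmult_le_pos; nra).
    assert (0 <= s*s*u*u*u*u) by (repeat apply Rmult_le_pos; unfold s; nra).
    unfold s in *. nra. }
  repeat split; nra.
Qed.

(** The defect of the approximation in the ratio recurrence at [N = a^2]:
    with [r_n ~ approx v] and [r_(n+1) ~ approx u], the recurrence
    [r_(n+1) D_n = (N+al) r_n - z] fails by [approx_residual al w a u v]. *)
Definition approx_residual (al : R) (w : Cpx) (a u v : R) : Cpx :=
  Csub (Csub (Cscal (a*a + al) (approx al w v)) (negsq w))
       (Cmul (approx al w u) (ratio_denom al w (a*a) (approx al w v))).

(** Expansion of the residual (times [u^2]) in which every coefficient is
    visibly [O(u^4)]; this is where the choice of [second_coef] is used. *)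
Lemma approx_residual_expansion al w a u v : 0 < a -> u = / a ->
  Cscal (u*u) (approx_residual al w a u v) =
  let d := v - u in let c := second_coef al w in let z := negsq w in
  Cadd (Cadd (Cadd (Cadd (Cadd (Cadd (Cadd (Cadd (Cadd
   (Cscal (d - u*u*u/2) w)
   (Cscal (d*(u+v)) c))
   (Cscal (al*u*u*d) w))
   (Cscal (al*u*u*v*v) c))
   (Cscal (u*u*u*u) (Cmul z c)))
   (Cscal (-(al*u*u)) (Cmul (approx al w u) (approx al w v))))
   (Cscal (u*d) z))
   (Cscal (-(u*d*(u+v))) (Cmul w c)))
   (Cscal (-(u*u*d)) (Cmul w c)))
   (Cscal (-(u*u*v*v)) (Cmul c c)).
Proof.
  intros Ha ->. destruct w as [p q].
  unfold approx_residual, ratio_denom, approx, second_coef, negsq. ceq; field; lra.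
Qed.

Lemma residual_coef_bounds al u v : 0 < u -> u <= 1/2 -> 0 < v -> v * v * (1 - u * u) = u * u ->
  let d := v - u in let u4 := u*u*u*u in
  Rabs (d - u*u*u/2) <= u4 /\ Rabs (d*(u+v)) <= 3*u4 /\ Rabs (al*u*u*d) <= Rabs al*u4 /\
  Rabs (al*u*u*v*v) <= 4*Rabs al*u4 /\ Rabs (u*u*u*u) <= u4 /\
  Rabs (-(al*u*u)) <= Rabs al * (u*u) /\ Rabs (u*d) <= u4 /\ Rabs (-(u*d*(u+v))) <= 3*u4 /\
  Rabs (-(u*u*d)) <= u4 /\ Rabs (-(u*u*v*v)) <= 4*u4.
Proof.
  intros Hu Hu2 Hv E d u4.
  destruct (inv_sqrt_step u v Hu Hu2 Hv E) as [F1 [F2 [F3 F4]]].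
  assert (Hu3 : 0 <= u*u*u) by (repeat apply Rmult_le_pos; lra).
  assert (Hu4 : 0 <= u4) by (unfold u4; repeat apply Rmult_le_pos; lra).
  assert (u4 <= u*u*u/2) by (apply Rmult_le_compat_l with (r := u*u*u) in Hu2; unfold u4; lra).
  assert (Hd : 0 <= d <= u*u*u) by (unfold d, u4 in *; lra).
  assert (Hu5 : u * u4 <= u4) by (apply Rmult_le_compat_r with (r := u4) in Hu2; lra).
  assert (Hud : 0 <= u*d <= u4).
  { split; [repeat apply Rmult_le_pos; lra|]. unfold u4. replace (u*u*u*u) with (u*(u*u*u)) by ring.
    apply Rmult_le_compat_l; lra. }
  assert (Huud : 0 <= u*u*d <= u4).
  { split; [repeat apply Rmult_le_pos; lra|]. apply Rle_trans with (u * u4); [|lra].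
    replace (u*u*d) with (u*(u*d)) by ring. apply Rmult_le_compat_l; lra. }
  assert (Hdu : 0 <= d*(u+v) <= 3*u4).
  { split; [repeat apply Rmult_le_pos; lra|]. unfold u4. replace (3*(u*u*u*u)) with ((u*u*u)*(3*u)) by ring.
    apply Rmult_le_compat; lra. }
  assert (Hudu : 0 <= u*d*(u+v) <= 3*u4).
  { split; [repeat apply Rmult_le_pos; lra|]. apply Rle_trans with (u * (3 * u4)); [|lra].
    rewrite Rmult_assoc. apply Rmult_le_compat_l; lra. }
  assert (Huvv : 0 <= u*u*v*v <= 4*u4).
  { split; [repeat apply Rmult_le_pos; lra|]. unfold u4. replace (u*u*v*v) with ((u*u)*(v*v)) by ring.
    replace (4*(u*u*u*u)) with ((u*u)*(4*(u*u))) by ring.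
    apply Rmult_le_compat_l; nra. }
  assert (Habs : forall x s, 0 <= x <= s -> Rabs x <= s /\ Rabs (- x) <= s).
  { intros x s Hx. rewrite Rabs_Ropp, Rabs_right by lra. lra. }
  assert (Hscaled : forall k x s, 0 <= x <= s -> Rabs (k * x) <= Rabs k * s).
  { intros k x s Hx. rewrite Rabs_mult, (Rabs_right x) by lra.
    apply Rmult_le_compat_l; [apply Rabs_pos|lra]. }
  repeat split.
  - apply Rabs_le. unfold u4, d. split; lra.
  - exact (proj1 (Habs _ _ Hdu)).
  - replace (al*u*u*d) with (al*(u*u*d)) by ring. auto.
  - replace (al*u*u*v*v) with (al*(u*u*v*v)) by ring.
    replace (4 * Rabs al * u4) with (Rabs al * (4 * u4)) by ring. auto.
  - apply Habs. unfold u4 in *. lra.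
  - rewrite Rabs_Ropp. replace (al*u*u) with (al*(u*u)) by ring. apply Hscaled. nra.
  - exact (proj1 (Habs _ _ Hud)).
  - exact (proj2 (Habs _ _ Hudu)).
  - exact (proj2 (Habs _ _ Huud)).
  - exact (proj2 (Habs _ _ Huvv)).
Qed.

Definition residual_const (al Wb : R) : R :=
  let cb := coef_bound al Wb in
  Wb + 3*cb + Rabs al * Wb + 4 * Rabs al * cb + Wb*Wb*cb + Rabs al * (2*(Wb+cb)*(Wb+cb)) +
  Wb*Wb + 3*(Wb*cb) + Wb*cb + 4*(cb*cb).

Lemma residual_const_pos al Wb : 0 < Wb -> 0 < residual_const al Wb.
Proof.
  intros HWb. unfold residual_const. pose proof (coef_bound_ge1 al Wb). pose proof (Rabs_pos al).
  set (cb := coef_bound al Wb) in *.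
  repeat apply Rplus_lt_le_0_compat; try lra; repeat apply Rmult_le_pos; lra.
Qed.

Ltac bound_tree := first
  [ eassumption
  | eapply bnd_add; [bound_tree | bound_tree]
  | eapply bnd_scal; [eassumption | bound_tree]
  | eapply bnd_mul; [bound_tree | bound_tree] ].

Lemma approx_residual_bound al Wb w a b : 0 < a -> 0 < b -> a*a = b*b+1 -> /a <= 1/2 ->
  Cnorm w <= Wb ->
  Cnorm (approx_residual al w a (/a) (/b)) <= residual_const al Wb * (/a * /a).
Proof.
  intros Ha Hb Hab Hu2 Hw.
  pose proof (approx_residual_expansion al w a (/a) (/b) Ha eq_refl) as Id.
  set (u := / a) in *. set (v := / b) in *.
  assert (Hu : 0 < u) by (unfold u; apply Rinv_0_lt_compat; auto).
  assert (Hv : 0 < v) by (unfold v; apply Rinv_0_lt_compat; auto).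
  assert (E : v * v * (1 - u * u) = u * u) by (unfold u, v; field_simplify_eq; try lra; nra).
  destruct (inv_sqrt_step u v Hu Hu2 Hv E) as [F1 [F2 _]].
  destruct (residual_coef_bounds al u v Hu Hu2 Hv E)
    as [K1 [K2 [K3 [K4 [K5 [K6 [K7 [K8 [K9 K10]]]]]]]]].
  simpl in Id.
  pose proof (Cnorm_ge0 w). pose proof (coef_bound_ge1 al Wb).
  set (cb := coef_bound al Wb) in *.
  set (c := second_coef al w) in *. set (z := negsq w) in *.
  assert (Hc : Cnorm c <= cb) by (apply norm_second_coef; auto).
  assert (Hz : Cnorm z <= Wb * Wb) by (apply norm_negsq_le; auto).
  assert (Ht : Cnorm (approx al w u) <= (Wb + cb) * u) by (apply norm_approx; lra).
  assert (Ht' : Cnorm (approx al w v) <= 2 * (Wb + cb) * u).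
  { pose proof (norm_approx al w Wb v ltac:(lra) ltac:(lra) Hw) as Htv. fold cb in Htv.
    apply Rmult_le_compat_l with (r := Wb + cb) in F2; lra. }
  assert (Hsum : Cnorm (Cscal (u*u) (approx_residual al w a u v))
                 <= residual_const al Wb * (u*u*u*u)).
  { rewrite Id. eapply Rle_trans; [bound_tree|]. apply Req_le. unfold residual_const. fold cb. ring. }
  rewrite Cnorm_scal, Rabs_right in Hsum by nra.
  apply Rmult_le_reg_l with (u*u); [nra|]. nra.
Qed.

(** * Stage 2: the error [|r_n - approx (1/sqrt n)|] contracts *)

Lemma one_minus_approx al w Wb om u : Cnorm w <= Wb -> om <= fst w -> 0 < om -> 0 <= u ->
  let cb := coef_bound al Wb in
  (2*cb + (Wb+cb)*(Wb+cb)) * u <= om/2 -> om * u <= 1 -> u <= 1 ->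
  Cnorm (Csub (RtoC 1) (approx al w u)) <= 1 - 3*om*u/4.
Proof.
  intros Hw Hom Hom0 Hu cb HK Hou Hu1.
  pose proof (norm_approx al w Wb u Hu Hu1 Hw) as Ht.
  pose proof (fst_approx_lower al w Wb om u Hu Hom Hw) as Hft.
  pose proof (coef_bound_ge1 al Wb). fold cb in Ht, Hft, H.
  apply Cnorm_le_sq; [lra|].
  pose proof (Cnorm_sq (approx al w u)) as Sq.
  destruct (approx al w u) as [t1 t2]. simpl in *.
  assert (Hn : t1*t1 + t2*t2 <= ((Wb+cb)*u)*((Wb+cb)*u)).
  { rewrite <- Sq. apply Rmult_le_compat; auto using Cnorm_ge0. }
  unfold Csub, Cadd, Copp, RtoC; simpl.
  assert (u*(2*cb + (Wb+cb)*(Wb+cb))*u <= u*(om/2))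
    by (rewrite Rmult_assoc, (Rmult_comm _ u); apply Rmult_le_compat_l; lra).
  nra.
Qed.

(** If [r_n] is within [om v / 4] of its approximation ([v = 1/sqrt n]), the
    denominator [D_n] of the recurrence at [N = a^2] has modulus at least
    [a^2 (1 + om u/4 - Wb^2 u^2)] ([u = 1/a]): its real part dominates. *)
Lemma denom_lower_bound al Wb om w a b r' : -1 < al -> 0 < om -> om <= fst w -> Cnorm w <= Wb ->
  0 < a -> 0 < b -> a*a = b*b + 1 ->
  let u := / a in let v := / b in
  u <= 1/2 -> 8 * coef_bound al Wb * u <= om ->
  Cnorm (Csub r' (approx al w v)) <= (om/4) * v ->
  a*a*(1 + om*u/4 - Wb*Wb*(u*u)) <= Cnorm (ratio_denom al w (a*a) r').
Proof.
  intros Hal Hom Hfw Hw Ha Hb Hab u v Hu1 Hu3 He'.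
  assert (Hu : 0 < u) by (unfold u; apply Rinv_0_lt_compat; auto).
  assert (Hv : 0 < v) by (unfold v; apply Rinv_0_lt_compat; auto).
  assert (Hau : a * u = 1) by (unfold u; field; lra).
  assert (E : v * v * (1 - u * u) = u * u) by (unfold u, v; field_simplify_eq; try lra; nra).
  destruct (inv_sqrt_step u v Hu Hu1 Hv E) as [F1 [F2 _]].
  pose proof (fst_approx_lower al w Wb om v ltac:(lra) Hfw Hw) as Hft'.
  pose proof (coef_bound_ge1 al Wb) as Hcb.
  set (cb := coef_bound al Wb) in *. clearbody u v.
  assert (Ha2 : 4 <= a*a).
  { assert (2 <= a) by (apply Rmult_le_reg_r with u; [lra|]; rewrite Hau; lra). nra. }
  pose proof (fst_bounds _ _ (norm_negsq_le w Wb Hw)) as Hz1.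
  pose proof (fst_bounds _ _ (Rle_refl (Cnorm (Csub r' (approx al w v))))) as Hfe'.
  assert (Hr' : fst r' = fst (approx al w v) + fst (Csub r' (approx al w v)))
    by (unfold Csub, Cadd, Copp; simpl; ring).
  assert (Hvcb : v*v*cb <= v*(om/4)) by (assert (v*cb <= om/4) by nra; nra).
  assert (Hfr' : v*om/2 <= fst r') by nra.
  set (m := a*a + al).
  assert (HfD : fst (ratio_denom al w (a*a) r') = a*a - fst (negsq w) + m * fst r')
    by (unfold ratio_denom, Csub, Cadd, Copp, Cscal, RtoC; simpl; unfold m; ring).
  assert (Hmr : a*a*u*om/4 <= m * fst r').
  { assert (a*a/2 * (v*om/2) <= m * fst r') by (apply Rmult_le_compat; unfold m; nra).
    assert (u*om <= v*om) by (apply Rmult_le_compat_r; lra). nra. }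
  pose proof (fst_le_Cnorm (ratio_denom al w (a*a) r')).
  pose proof (Rle_abs (fst (ratio_denom al w (a*a) r'))).
  replace (a*a*(1 + om*u/4 - Wb*Wb*(u*u))) with (a*a + a*a*u*om/4 - Wb*Wb*((a*u)*(a*u))) by field.
  rewrite Hau. lra.
Qed.

Lemma error_identity al w a u v r' rN :
  Cmul rN (ratio_denom al w (a*a) r') = Csub (Cscal (a*a + al) r') (negsq w) ->
  Cmul (Csub rN (approx al w u)) (ratio_denom al w (a*a) r') =
  Cadd (approx_residual al w a u v)
       (Cscal (a*a + al) (Cmul (Csub (RtoC 1) (approx al w u)) (Csub r' (approx al w v)))).
Proof.
  intros HrN.
  replace (Cmul (Csub rN (approx al w u)) (ratio_denom al w (a*a) r'))
    with (Csub (Cmul rN (ratio_denom al w (a*a) r')) (Cmul (approx al w u) (ratio_denom al w (a*a) r')))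
    by (ceq; ring).
  rewrite HrN. unfold approx_residual, ratio_denom. ceq; ring.
Qed.

(** The loss from [N + al > N] is beaten by the gains [1 - 3 om u/4] in
    [|1 - t_u|] and [L = 1 + om u/4 - Wb^2 u^2] in [|D_n|/N]. *)
Lemma contraction_balance al Wb om u : 0 < om -> 0 < u -> om * u <= 1/2 ->
  2*(Rabs al + Wb*Wb + om*om/8)*u <= om ->
  (1 + Rabs al*(u*u)) * (1 - 3*om*u/4) <= (1 - om*u/2) * (1 + om*u/4 - Wb*Wb*(u*u)).
Proof.
  intros Hom Hu Hou H. pose proof (Rabs_pos al).
  assert (u*(2*(Rabs al + Wb*Wb + om*om/8)*u) <= u*om) by (apply Rmult_le_compat_l; lra).
  assert (0 <= u*u*u*(Wb*Wb*om/2 + 3*Rabs al*om/4)) by (repeat apply Rmult_le_pos; nra).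
  nra.
Qed.

Lemma error_step al Wb om w a b r' rN :
  -1 < al -> 0 < om -> om <= fst w -> Cnorm w <= Wb -> 1 <= Wb ->
  0 < a -> 0 < b -> a*a = b*b + 1 ->
  let u := / a in let v := / b in let cb := coef_bound al Wb in
  u <= 1/2 -> Wb*Wb*u <= om/4 -> 8*cb*u <= om -> (2*cb + (Wb+cb)*(Wb+cb)) * u <= om/2 ->
  2*(Rabs al + Wb*Wb + om*om/8)*u <= om ->
  Cmul rN (ratio_denom al w (a*a) r') = Csub (Cscal (a*a + al) r') (negsq w) ->
  Cnorm (Csub r' (approx al w v)) <= (om/4) * v ->
  Cnorm (Csub rN (approx al w u))
    <= (1 - om*u/2) * Cnorm (Csub r' (approx al w v)) + residual_const al Wb * (u*u*u*u).
Proof.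
  intros Hal Hom Hfw Hw HWb Ha Hb Hab u v cb Hu1 Hu2 Hu3 Hu4 Hu5 HrN He'.
  pose proof (denom_lower_bound al Wb om w a b r' Hal Hom Hfw Hw Ha Hb Hab Hu1 Hu3 He') as HDn.
  pose proof (approx_residual_bound al Wb w a b Ha Hb Hab Hu1 Hw) as HN.
  pose proof (error_identity al w a u v r' rN HrN) as Id.
  fold u v in HDn, HN.
  assert (Hu : 0 < u) by (unfold u; apply Rinv_0_lt_compat; auto).
  assert (Hau : a * u = 1) by (unfold u; field; lra).
  assert (Hwom : om <= Wb) by (pose proof (fst_bounds w Wb Hw); lra).
  assert (Hou : om * u <= 1/2) by nra.
  pose proof (one_minus_approx al w Wb om u Hw Hfw Hom ltac:(lra) Hu4 ltac:(lra) ltac:(lra)) as H1t.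
  clearbody u v.
  pose proof (residual_const_pos al Wb ltac:(lra)) as HC1.
  set (m := a*a + al) in *. set (e' := Csub r' (approx al w v)) in *.
  set (D := ratio_denom al w (a*a) r') in *.
  set (L := 1 + om*u/4 - Wb*Wb*(u*u)) in *.
  assert (HL1 : 1 <= L).
  { unfold L. assert (Wb*Wb*u*u <= om/4*u) by (apply Rmult_le_compat_r; lra). lra. }
  assert (Hm : 0 <= m <= a*a*(1 + Rabs al * (u*u))).
  { assert (4 <= a*a) by (assert (2 <= a) by (apply Rmult_le_reg_r with u; [lra|]; rewrite Hau; lra); nra).
    unfold m. replace (a*a*(1 + Rabs al*(u*u))) with (a*a + Rabs al * ((a*u)*(a*u))) by ring.
    rewrite Hau. pose proof (Rle_abs al). lra. }
  pose proof (Cnorm_ge0 e') as He0.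
  assert (Hmain : Cnorm (Csub rN (approx al w u)) * Cnorm D
                  <= residual_const al Wb * (u*u) + m * ((1 - 3*om*u/4) * Cnorm e')).
  { rewrite <- Cnorm_mul, Id. eapply Rle_trans; [apply bnd_add; [exact HN|]|apply Rle_refl].
    apply bnd_scal; [rewrite Rabs_right; lra|]. apply bnd_mul; [exact H1t|apply Rle_refl]. }
  pose proof (contraction_balance al Wb om u Hom Hu ltac:(lra) Hu5) as Hpoly. fold L in Hpoly.
  assert (Hm3 : m * (1 - 3*om*u/4) <= a*a*((1 - om*u/2) * L)).
  { apply Rle_trans with (a*a*(1 + Rabs al*(u*u)) * (1 - 3*om*u/4)).
    - apply Rmult_le_compat_r; lra.
    - rewrite Rmult_assoc. apply Rmult_le_compat_l; [nra|exact Hpoly]. }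
  assert (Hpos : 0 < a*a*L) by nra.
  apply Rmult_le_reg_r with (a*a*L); [exact Hpos|].
  apply Rle_trans with (Cnorm (Csub rN (approx al w u)) * Cnorm D);
    [apply Rmult_le_compat_l; [apply Cnorm_ge0|exact HDn]|].
  eapply Rle_trans; [exact Hmain|].
  assert (residual_const al Wb * (u*u) <= residual_const al Wb * (u*u*u*u) * (a*a*L)).
  { replace (residual_const al Wb * (u*u*u*u) * (a*a*L))
      with (residual_const al Wb * (u*u) * ((a*u)*(a*u)) * L) by ring.
    rewrite Hau. assert (0 <= residual_const al Wb * (u*u)) by nra. nra. }
  assert (m * ((1 - 3*om*u/4) * Cnorm e') <= a*a*((1 - om*u/2) * L) * Cnorm e')
    by (rewrite <- Rmult_assoc; apply Rmult_le_compat_r; lra).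
  lra.
Qed.

(** * Two discrete Gronwall-type lemmas for real sequences

    Both stages of the proof reduce to a recursive inequality
    [y_(n+1) <= (1 - c/sqrt(n+1)) y_n + (small)]. Since [sum 1/sqrt n]
    diverges, such a sequence drifts down by a fixed multiple of
    [sqrt(n+1) - sqrt n] while it is above its equilibrium level. *)

Lemma sqrt_sq_INR n : sqrt (INR n) * sqrt (INR n) = INR n.
Proof. apply sqrt_sqrt. apply pos_INR. Qed.

Lemma sqrt_INR_mono m n : (m <= n)%nat -> sqrt (INR m) <= sqrt (INR n).
Proof. intros H. apply sqrt_le_1_alt. apply le_INR; auto. Qed.

Lemma sqrt_INR_ge1 n : (1 <= n)%nat -> 1 <= sqrt (INR n).
Proof. intros H. rewrite <- sqrt_1. apply sqrt_le_1_alt. apply (le_INR 1). auto. Qed.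

Lemma eventually_sqrt_ge (N0 : nat) (A : R) : exists N : nat, (N0 <= N)%nat /\ (1 <= N)%nat /\
  forall n, (N <= n)%nat -> A <= sqrt (INR n).
Proof.
  destruct (INR_archimed 1 (A*A) Rlt_0_1) as [k Hk].
  exists (Nat.max (Nat.max N0 k) 1). split; [lia|split; [lia|]].
  intros n Hn. destruct (Rle_lt_dec A 0); [pose proof (sqrt_pos (INR n)); lra|].
  apply Rsqr_incr_0_var; [|apply sqrt_pos]. unfold Rsqr. rewrite sqrt_sq_INR.
  assert (INR k <= INR n) by (apply le_INR; lia). lra.
Qed.

Lemma eventually_sqrt_gap (N' : nat) (B : R) : (1 <= N')%nat -> exists N : nat, (N' <= N)%nat /\
  forall n, (N <= n)%nat -> sqrt (INR N') + B <= sqrt (INR n).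
Proof.
  intros HN. destruct (INR_archimed 1 B Rlt_0_1) as [j Hj].
  exists ((N' + j) * (N' + j))%nat. split; [nia|].
  intros n Hn.
  assert (Hs : sqrt (INR ((N' + j) * (N' + j))) = INR N' + INR j).
  { rewrite mult_INR, plus_INR. apply sqrt_square. pose proof (pos_INR N'); pose proof (pos_INR j); lra. }
  pose proof (sqrt_INR_mono _ _ Hn) as Hm. rewrite Hs in Hm.
  assert (sqrt (INR N') <= INR N').
  { assert (1 <= INR N') by (apply (le_INR 1); auto).
    apply Rsqr_incr_0_var; [|lra]. unfold Rsqr. rewrite sqrt_sq_INR. nra. }
  lra.
Qed.

Lemma consecutive_sqrt n : (1 <= n)%nat ->
  let a := sqrt (INR (S n)) in let b := sqrt (INR n) in
  1 <= b /\ b < a /\ a * a = b * b + 1 /\ a - b <= / a.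
Proof.
  intros Hn a b.
  assert (Ea : a * a = b * b + 1) by (unfold a, b; rewrite !sqrt_sq_INR, S_INR; ring).
  assert (Hb1 : 1 <= b) by (apply sqrt_INR_ge1; auto).
  assert (Ha0 : 0 <= a) by (unfold a; apply sqrt_pos).
  assert (b < a) by nra.
  repeat split; try lra.
  apply Rmult_le_reg_r with a; [lra|]. rewrite Rinv_l by lra. nra.
Qed.

Lemma drift_to_level (y : nat -> R) (T c Y0 : R) (N' N : nat) : 0 < c -> y N' <= Y0 ->
  (forall n, (N' <= n)%nat -> y (S n) <= Rmax T (y n - c * (sqrt (INR (S n)) - sqrt (INR n)))) ->
  (N' <= N)%nat -> (forall n, (N <= n)%nat -> sqrt (INR N') + (Y0 - T)/c <= sqrt (INR n)) ->
  forall n, (N <= n)%nat -> y n <= T.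
Proof.
  intros Hc H0 Hstep HN' HN.
  assert (Inv : forall j, y (N' + j)%nat <= Rmax T (Y0 - c * (sqrt (INR (N' + j)) - sqrt (INR N')))).
  { induction j.
    - rewrite Nat.add_0_r, Rminus_diag, Rmult_0_r, Rminus_0_r. eapply Rle_trans; [exact H0|apply Rmax_r].
    - rewrite Nat.add_succ_r. eapply Rle_trans; [apply Hstep; lia|].
      apply Rmax_lub; [apply Rmax_l|].
      apply Rmax_Rle in IHj as [I|I]; [eapply Rle_trans; [|apply Rmax_l]|eapply Rle_trans; [|apply Rmax_r]];
        pose proof (sqrt_INR_mono _ _ (Nat.le_succ_diag_r (N' + j))); nra. }
  intros n Hn. specialize (Inv (n - N')%nat). replace (N' + (n - N'))%nat with n in Inv by lia.
  pose proof (HN n Hn) as Hgap.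
  assert (Y0 - c * (sqrt (INR n) - sqrt (INR N')) <= T).
  { apply Rmult_le_compat_l with (r := c) in Hgap; [|lra].
    replace (c * (sqrt (INR N') + (Y0 - T) / c)) with (c * sqrt (INR N') + (Y0 - T)) in Hgap
      by (field; lra). lra. }
  unfold Rmax in Inv. destruct (Rle_dec T _); lra.
Qed.

Lemma level_step (om C dl a b th th' : R) : 0 < om -> 0 <= C -> 0 < dl ->
  8*C/(om*dl) + om <= a -> 0 < b < a -> a - b <= / a -> 0 <= th ->
  th' <= (1 - om/a/4) * th + C/(a*a) -> th' <= Rmax dl (th - om*dl/8*(a - b)).
Proof.
  intros Hom HC Hd Ha [Hb Hba] Hab Hth Hs.
  assert (H8 : 0 <= 8*C/(om*dl)) by (apply Rmult_le_pos; [lra|apply Rlt_le, Rinv_0_lt_compat; nra]).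
  set (x := om / a).
  assert (Hx : 0 < x <= 1) by (unfold x; split; [apply Rdiv_lt_0_compat|apply Rmult_le_reg_r with a;
    [|unfold Rdiv; rewrite Rmult_assoc, Rinv_l]]; lra).
  assert (HCa : C / (a*a) <= x*dl/8).
  { unfold x. apply Rmult_le_reg_r with (8*(a*a)/dl); [apply Rdiv_lt_0_compat; nra|].
    replace (C / (a*a) * (8*(a*a)/dl)) with (8*C/dl) by (field; lra).
    replace (om / a * dl / 8 * (8 * (a*a) / dl)) with (om * a) by (field; lra).
    apply Rmult_le_compat_l with (r := om) in Ha; [|lra].
    replace (om * (8*C/(om*dl) + om)) with (8*C/dl + om*om) in Ha by (field; lra). nra. }
  assert (Hgap : om*dl/8*(a - b) <= x*dl/8).
  { unfold x. replace (om / a * dl / 8) with (om*dl/8 * /a) by (field; lra).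
    apply Rmult_le_compat_l; [nra|lra]. }
  fold x in Hs.
  destruct (Rle_lt_dec dl th) as [Hge|Hlt].
  - eapply Rle_trans; [|apply Rmax_r].
    assert (x/4*dl <= x/4*th) by (apply Rmult_le_compat_l; lra). nra.
  - eapply Rle_trans; [|apply Rmax_l].
    assert ((1 - x/4) * th <= (1 - x/4) * dl) by (apply Rmult_le_compat_l; lra). nra.
Qed.

Lemma contraction_reaches_level (om C dl : R) (N0 : nat) : 0 < om -> 0 <= C -> 0 < dl ->
  exists N1 : nat, (N0 <= N1)%nat /\ forall th : nat -> R,
  (forall n, (N0 <= n)%nat -> 0 <= th n <= 1) ->
  (forall n, (N0 <= n)%nat -> th (S n) <= (1 - om / sqrt (INR (S n)) / 4) * th n + C / INR (S n)) ->
  forall n, (N1 <= n)%nat -> th n <= dl.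
Proof.
  intros Hom HC Hd.
  destruct (eventually_sqrt_ge N0 (8*C/(om*dl) + om)) as [N' [HN'0 [HN'1 HA]]].
  set (c := om*dl/8).
  destruct (eventually_sqrt_gap N' ((1 - dl)/c) HN'1) as [N1 [HN1 HB]].
  exists N1. split; [lia|]. intros th Hth Hst.
  apply (drift_to_level th dl c 1 N' N1); auto.
  - unfold c. nra.
  - apply Hth. lia.
  - intros n Hn. destruct (consecutive_sqrt n ltac:(lia)) as [Hb1 [Hba [_ Hab]]].
    apply (level_step om C dl); [lra|lra|lra|apply HA; lia|lra|exact Hab|apply Hth; lia|].
    rewrite sqrt_sq_INR. apply Hst. lia.
Qed.

Lemma cube_ratio a b : 0 < a -> 0 < b -> a*a = b*b + 1 -> 4 <= a*a ->
  a*a*a <= (1 + 5/(a*a)) * (b*b*b).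
Proof.
  intros Ha0 Hb Hab Ha.
  assert (H5 : 0 <= 5/(a*a)) by (apply Rmult_le_pos; [lra|apply Rlt_le, Rinv_0_lt_compat; nra]).
  apply Rsqr_incr_0_var; [|apply Rmult_le_pos; [lra|repeat apply Rmult_le_pos; lra]].
  unfold Rsqr. replace (a*a*a*(a*a*a)) with ((a*a)*(a*a)*(a*a)) by ring.
  set (s := a*a). assert (Hbb : b*b = s - 1) by (unfold s; lra).
  replace ((1 + 5/s) * (b*b*b) * ((1 + 5/s) * (b*b*b)))
    with ((s+5)*(s+5)*((b*b)*(b*b)*(b*b))/(s*s)) by (field; unfold s; nra).
  assert (Hs4 : 4 <= s) by (unfold s; lra). clearbody s.
  rewrite Hbb. apply Rmult_le_reg_r with (s*s); [nra|].
  replace ((s + 5) * (s + 5) * ((s - 1) * (s - 1) * (s - 1)) / (s * s) * (s * s))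
    with ((s + 5) * (s + 5) * ((s - 1) * (s - 1) * (s - 1))) by (field; nra).
  assert (0 <= s*s*(7*s*s - 2*s - 46)) by (apply Rmult_le_pos; nra).
  assert ((s + 5) * (s + 5) * ((s - 1) * (s - 1) * (s - 1)) - s*s*s*(s*s)
          = s*s*(7*s*s - 2*s - 46) + (65*s - 25)) by ring.
  lra.
Qed.

(** One step of [E' <= (1 - om/(2a)) E + C1/a^4], in terms of the rescaled
    quantities [y = E b^3], [y' = E' a^3]: above [8 C1/om] the rescaled
    sequence drops by [C1 (a - b)], below it stays below. *)
Lemma rate_step (om C1 a b En En' : R) : 0 < om -> 0 < C1 -> 20/om + om + 2 <= a ->
  0 < b -> a*a = b*b + 1 -> a - b <= / a -> 0 <= En ->
  En' <= (1 - om/a/2) * En + C1/(a*a*(a*a)) ->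
  En' * (a*a*a) <= Rmax (8*C1/om) (En*(b*b*b) - C1*(a - b)).
Proof.
  intros Hom HC1 Ha Hb Hab Hamb HEn Hs.
  assert (Hom20 : 0 < 20/om) by (apply Rdiv_lt_0_compat; lra).
  assert (Ha0 : 0 < a) by lra.
  assert (Hcr : a*a*a <= (1 + 5/(a*a)) * (b*b*b)) by (apply cube_ratio; nra).
  set (y := En * (b*b*b)).
  assert (Hy : 0 <= y) by (unfold y; apply Rmult_le_pos; [lra|]; repeat apply Rmult_le_pos; lra).
  set (z := om / a). set (T := 8*C1/om).
  assert (Hz : 0 < z <= 1) by (unfold z; split; [apply Rdiv_lt_0_compat|apply Rmult_le_reg_r with a;
    [|unfold Rdiv; rewrite Rmult_assoc, Rinv_l]]; lra).
  assert (H5 : 5 / (a*a) <= z / 4).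
  { unfold z. apply Rmult_le_reg_r with (4*(a*a)); [nra|].
    replace (5 / (a*a) * (4*(a*a))) with 20 by (field; lra).
    replace (om / a / 4 * (4*(a*a))) with (om * a) by (field; lra).
    assert (H20 : 20/om <= a) by lra. apply Rmult_le_compat_l with (r := om) in H20; [|lra].
    replace (om * (20/om)) with 20 in H20 by (field; lra). lra. }
  assert (Hstep : En' * (a*a*a) <= (1 - z/4) * y + C1 / a).
  { apply Rmult_le_compat_r with (r := a*a*a) in Hs; [|nra].
    replace (((1 - om/a/2) * En + C1 / (a*a*(a*a))) * (a*a*a))
      with ((1 - z/2) * (En * (a*a*a)) + C1/a) in Hs by (unfold z; field; lra).
    assert (En * (a*a*a) <= (1 + 5/(a*a)) * y).
    { unfold y. replace ((1 + 5/(a*a)) * (En * (b*b*b))) with (En * ((1 + 5/(a*a)) * (b*b*b))) by ring.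
      apply Rmult_le_compat_l; lra. }
    assert ((1 - z/2) * (En * (a*a*a)) <= (1 - z/2) * ((1 + 5/(a*a)) * y))
      by (apply Rmult_le_compat_l; lra).
    assert (0 <= 5/(a*a)) by (apply Rmult_le_pos; [lra|apply Rlt_le, Rinv_0_lt_compat; nra]).
    assert (0 <= z/2 * (5/(a*a)) * y) by (apply Rmult_le_pos; [apply Rmult_le_pos|]; lra).
    assert (5/(a*a) * y <= z/4 * y) by (apply Rmult_le_compat_r; lra).
    nra. }
  assert (HzT : z/4 * T = 2 * (C1/a)) by (unfold z, T; field; lra).
  assert (HkC : C1 * (a - b) <= C1 / a) by (unfold Rdiv; apply Rmult_le_compat_l; lra).
  clearbody z T.
  destruct (Rle_lt_dec T y) as [Hge|Hlt].
  - eapply Rle_trans; [|apply Rmax_r].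
    assert (z/4 * T <= z/4 * y) by (apply Rmult_le_compat_l; lra). nra.
  - eapply Rle_trans; [|apply Rmax_l].
    assert ((1 - z/4) * y <= (1 - z/4) * T) by (apply Rmult_le_compat_l; lra). nra.
Qed.

Lemma contraction_rate (om C1 eta : R) (N0 : nat) : 0 < om -> 0 < C1 -> 0 < eta ->
  exists N2 M, forall E : nat -> R, (forall n, 0 <= E n) ->
  (forall n, (N0 <= n)%nat -> E n <= eta / sqrt (INR n)) ->
  (forall n, (N0 <= n)%nat ->
     E (S n) <= (1 - om / sqrt (INR (S n)) / 2) * E n + C1 / (INR (S n) * INR (S n))) ->
  forall n, (N2 <= n)%nat -> E n <= M / (INR n * sqrt (INR n)).
Proof.
  intros Hom HC1 Heta.
  destruct (eventually_sqrt_ge N0 (20/om + om + 2)) as [N' [HN'0 [HN'1 HA]]].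
  set (T := 8*C1/om). set (Y0 := eta * INR N').
  destruct (eventually_sqrt_gap N' ((Y0 - T)/C1) HN'1) as [N2 [HN2 HB]].
  exists N2, T. intros E HE0 HEb Hst.
  set (y := fun n => E n * (sqrt (INR n) * sqrt (INR n) * sqrt (INR n))).
  assert (Hy : forall n, (N2 <= n)%nat -> y n <= T).
  { apply (drift_to_level y T C1 Y0 N' N2); auto.
    - unfold y, Y0. pose proof (sqrt_INR_ge1 N' HN'1) as Hs0. pose proof (HEb N' HN'0) as H.
      apply Rmult_le_compat_r with (r := sqrt (INR N') * sqrt (INR N') * sqrt (INR N')) in H; [|nra].
      replace (eta * INR N') with (eta * (sqrt (INR N') * sqrt (INR N'))) by (rewrite sqrt_sq_INR; ring).
      replace (eta / sqrt (INR N') * (sqrt (INR N') * sqrt (INR N') * sqrt (INR N')))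
        with (eta * (sqrt (INR N') * sqrt (INR N'))) in H by (field; lra). exact H.
    - intros n Hn. destruct (consecutive_sqrt n ltac:(lia)) as [Hb1 [Hba [Hab Hamb]]].
      apply rate_step with (om := om); [lra|lra|apply HA; lia|lra|exact Hab|exact Hamb|apply HE0|].
      rewrite sqrt_sq_INR. apply Hst. lia. }
  intros n Hn. pose proof (Hy n Hn) as Hyn. unfold y in Hyn.
  assert (Hsn : 1 <= sqrt (INR n)) by (apply sqrt_INR_ge1; lia).
  rewrite <- (sqrt_sq_INR n) at 1.
  apply Rmult_le_reg_r with (sqrt (INR n) * sqrt (INR n) * sqrt (INR n)); [nra|].
  replace (T / (sqrt (INR n) * sqrt (INR n) * sqrt (INR n)) * (sqrt (INR n) * sqrt (INR n) * sqrt (INR n)))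
    with T by (field; lra).
  exact Hyn.
Qed.

Lemma approx_close_of_mobius al w Wb a r dl : 0 < a -> 0 <= dl -> dl <= 1/2 -> Cnorm w <= Wb ->
  0 < Cnorm (Cadd (Cscal a r) w) -> mobius_dist w a r <= dl ->
  Cnorm (Csub r (approx al w (/a))) <= 4*dl*Wb*(/a) + coef_bound al Wb * (/a*/a).
Proof.
  intros Ha Hd Hd2 Hw HQ Hth.
  assert (HP : Cnorm (Csub (Cscal a r) w) <= dl * Cnorm (Cadd (Cscal a r) w)).
  { unfold mobius_dist in Hth. apply Rmult_le_compat_r with (r := Cnorm (Cadd (Cscal a r) w)) in Hth; [|lra].
    unfold Rdiv in Hth. rewrite Rmult_assoc, Rinv_l in Hth by lra. lra. }
  pose proof (mobius_dist_small w a r dl Wb Ha Hd Hd2 Hw HP) as HX.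
  replace (Csub r (approx al w (/a)))
    with (Csub (Cscal (/a) (Csub (Cscal a r) w)) (Cscal (/a*/a) (second_coef al w)))
    by (unfold approx; ceq; field; lra).
  assert (Hia : 0 < /a) by (apply Rinv_0_lt_compat; lra).
  eapply Rle_trans; [apply Cnorm_sub_le|].
  apply Rplus_le_compat; rewrite Cnorm_scal, Rabs_right by nra.
  - rewrite Rmult_comm. apply Rmult_le_compat_r; lra.
  - rewrite (Rmult_comm (coef_bound al Wb)).
    apply Rmult_le_compat_l; [nra|apply norm_second_coef; auto].
Qed.

Lemma error_of_small_mobius al w Wb om a r : 0 < a -> 0 < om -> om <= Wb -> 0 < fst w ->
  Cnorm w <= Wb -> 0 <= re_dot r w -> 8 * coef_bound al Wb * (/a) <= om ->
  mobius_dist w a r <= om / (32*Wb) ->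
  Cnorm (Csub r (approx al w (/a))) <= om/4 / a.
Proof.
  intros Ha Hom HomWb Hw Hnw Hre H8 Hth.
  destruct (mobius_dist_bounds a w r Ha Hw Hre) as [HQ _].
  assert (Hdl2 : om / (32*Wb) <= 1/2).
  { apply Rmult_le_reg_r with (32*Wb); [lra|]. unfold Rdiv. rewrite Rmult_assoc, Rinv_l; lra. }
  pose proof (approx_close_of_mobius al w Wb a r (om / (32*Wb)) Ha
    ltac:(apply Rlt_le, Rdiv_lt_0_compat; lra) Hdl2 Hnw HQ Hth) as HE.
  eapply Rle_trans; [exact HE|].
  assert (4*(om/(32*Wb))*Wb = om/8) by (field; lra).
  assert (Hia : 0 < / a) by (apply Rinv_0_lt_compat; lra).
  assert (coef_bound al Wb * (/a * /a) <= om/8 * /a).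
  { rewrite <- Rmult_assoc. apply Rmult_le_compat_r; lra. }
  unfold Rdiv at 2. nra.
Qed.

Lemma expansion_as_approx al z n : 0 < INR n ->
  Cadd (Csqrt (Cscal (/ INR n) (Copp z)))
       (Cscal (/ INR n) (Cadd (RtoC (al / 2 + 1 / 4)) (Cscal (1 / 2) z)))
  = approx al (Csqrt (Copp z)) (/ sqrt (INR n)).
Proof.
  intros Hn. rewrite Csqrt_scal, sqrt_inv by (apply Rinv_0_lt_compat; lra).
  unfold approx, second_coef, negsq. rewrite Csqrt_sq.
  replace (/ sqrt (INR n) * / sqrt (INR n)) with (/ INR n)
    by (rewrite <- Rinv_mult, sqrt_sqrt by lra; reflexivity).
  f_equal. f_equal. f_equal. ceq; ring.
Qed.

Section UniformEstimates.

Variables (alpha Wb om : R).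
Hypothesis halpha : -1 < alpha.
Hypothesis Hom : 0 < om.
Hypothesis HomWb : om <= Wb.
Hypothesis HWb : 1 <= Wb.

Let cb := coef_bound alpha Wb.
Let C0 := mobius_const alpha Wb.
Let C1 := residual_const alpha Wb.

(** The largeness conditions on the scale [a = sqrt n] required by
    [mobius_step] (first line) and [error_step] (the others). *)
Definition large_scale (a : R) : Prop :=
  0 < a /\ Wb <= a /\ 2 <= a*a /\ 4*C0 <= a*a /\ 8*C0 <= om*a /\
  /a <= 1/2 /\ Wb*Wb*(/a) <= om/4 /\ 8*cb*(/a) <= om /\
  (2*cb + (Wb+cb)*(Wb+cb))*(/a) <= om/2 /\ 2*(Rabs alpha + Wb*Wb + om*om/8)*(/a) <= om.

Lemma inv_scale_le (X a : R) : 0 < a -> X / om <= a -> X * / a <= om.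
Proof.
  intros Ha H. apply Rmult_le_reg_r with a; [lra|].
  replace (X * /a * a) with X by (field; lra).
  apply Rmult_le_compat_l with (r := om) in H; [|lra].
  replace (om * (X/om)) with X in H by (field; lra). lra.
Qed.

Lemma large_scale_eventually : exists Nb : nat, (1 <= Nb)%nat /\
  forall k, (Nb <= k)%nat -> large_scale (sqrt (INR k)).
Proof.
  assert (Hcb : 1 <= cb) by apply coef_bound_ge1.
  assert (HC0 : 0 <= C0) by (apply mobius_const_nonneg; lra).
  set (t1 := 8*C0/om). set (t2 := 4*(Wb*Wb)/om). set (t3 := 8*cb/om).
  set (t4 := 2*(2*cb + (Wb+cb)*(Wb+cb))/om). set (t5 := 2*(Rabs alpha + Wb*Wb + om*om/8)/om).
  assert (Ht : 0 <= t1 /\ 0 <= t2 /\ 0 <= t3 /\ 0 <= t4 /\ 0 <= t5).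
  { unfold t1, t2, t3, t4, t5. pose proof (Rabs_pos alpha).
    repeat split; apply Rmult_le_pos; try (apply Rlt_le, Rinv_0_lt_compat; lra); nra. }
  destruct (eventually_sqrt_ge 1 (Wb + 2 + 4*C0 + t1 + t2 + t3 + t4 + t5)) as [Nb [_ [HNb1 HNbA]]].
  exists Nb. split; [exact HNb1|]. intros k Hk. pose proof (HNbA k Hk) as HA.
  set (a := sqrt (INR k)) in *.
  assert (Ha0 : 0 < a) by lra.
  assert (Ha2 : 2 <= a) by lra.
  unfold large_scale. repeat split.
  - exact Ha0.
  - lra.
  - nra.
  - assert (4*C0 <= a) by lra. nra.
  - assert (t1 <= a) by lra. apply Rmult_le_compat_l with (r := om) in H; [|lra].
    unfold t1 in H. replace (om * (8*C0/om)) with (8*C0) in H by (field; lra). lra.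
  - apply Rmult_le_reg_r with a; [lra|]. rewrite Rinv_l by lra. lra.
  - pose proof (inv_scale_le (4*(Wb*Wb)) a Ha0 ltac:(fold t2; lra)). lra.
  - apply inv_scale_le; [lra|fold t3; lra].
  - pose proof (inv_scale_le (2*(2*cb + (Wb+cb)*(Wb+cb))) a Ha0 ltac:(fold t4; lra)). lra.
  - apply inv_scale_le; [lra|fold t5; lra].
Qed.

Lemma stage1_uniform : exists N1 : nat, (1 <= N1)%nat /\
  forall w, om <= fst w -> Cnorm w <= Wb ->
  forall k, (N1 <= k)%nat -> mobius_dist w (sqrt (INR k)) (lag_ratio alpha (negsq w) k) <= om / (32*Wb).
Proof.
  destruct large_scale_eventually as [Nb [HNb1 Hlarge]].
  assert (HC0 : 0 <= C0) by (apply mobius_const_nonneg; lra).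
  assert (Hdl : 0 < om / (32*Wb)) by (apply Rdiv_lt_0_compat; lra).
  destruct (contraction_reaches_level om (2*C0) (om / (32*Wb)) Nb Hom ltac:(lra) Hdl)
    as [N1 [HN1 Hit]].
  exists N1. split; [lia|]. intros w Hfw Hw.
  pose proof (lag_ratio_recurrence alpha w halpha ltac:(lra)) as Hrec. cbv zeta in Hrec.
  set (r := lag_ratio alpha (negsq w)) in *.
  apply (Hit (fun k => mobius_dist w (sqrt (INR k)) (r k))).
  - intros k Hk. destruct (Hlarge k Hk) as [Ha0 _]. destruct (Hrec k) as [Hre _].
    apply mobius_dist_01; lra.
  - intros k Hk.
    destruct (Hlarge (S k) ltac:(lia)) as [Ha0 [HWa [Ha2 [HC4 [HC8 _]]]]].
    destruct (consecutive_sqrt k ltac:(lia)) as [Hb1 [_ [Hab _]]].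
    destruct (Hrec k) as [Hre [HD HrN]].
    rewrite <- (sqrt_sq_INR (S k)) in HD, HrN.
    pose proof (mobius_step alpha Wb om w (sqrt (INR (S k))) (sqrt (INR k)) (r k) (r (S k))
       Hom Hfw Hw Ha0 ltac:(lra) Hab HWa Ha2 HC4 HC8 Hre HD HrN) as Hstep.
    fold C0 in Hstep. rewrite sqrt_sq_INR in Hstep. cbv beta.
    replace (2*C0 / INR (S k)) with (2 * (C0 / INR (S k))) by (unfold Rdiv; ring). exact Hstep.
Qed.

Lemma stage2_uniform : exists (M : R) (N : nat), forall w, om <= fst w -> Cnorm w <= Wb ->
  forall n, (N <= n)%nat ->
  Cnorm (Csub (lag_ratio alpha (negsq w) n) (approx alpha w (/ sqrt (INR n))))
    <= M / (INR n * sqrt (INR n)).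
Proof.
  destruct large_scale_eventually as [Nb [HNb1 Hlarge]].
  destruct stage1_uniform as [N1 [HN1 Hstage1]].
  assert (HC1 : 0 < C1) by (apply residual_const_pos; lra).
  destruct (contraction_rate om C1 (om/4) (Nb + N1) Hom HC1 ltac:(lra)) as [N2 [M Hit]].
  exists M, N2. intros w Hfw Hw.
  pose proof (lag_ratio_recurrence alpha w halpha ltac:(lra)) as Hrec. cbv zeta in Hrec.
  set (r := lag_ratio alpha (negsq w)) in *.
  set (E := fun k => Cnorm (Csub (r k) (approx alpha w (/ sqrt (INR k))))).
  (* Stage 1 makes the error [O(1/sqrt n)], which starts stage 2. *)
  assert (HEb : forall k, (Nb + N1 <= k)%nat -> E k <= om/4 / sqrt (INR k)).
  { intros k Hk. destruct (Hlarge k ltac:(lia)) as [Ha0 [_ [_ [_ [_ [_ [_ [H8 _]]]]]]]].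
    destruct (Hrec k) as [Hre _].
    apply error_of_small_mobius with (om := om) (Wb := Wb); auto; try lra.
    apply Hstage1; auto; lia. }
  apply (Hit E); [intro k; apply Cnorm_ge0|exact HEb|].
  intros k Hk.
  destruct (Hlarge (S k) ltac:(lia)) as [Ha0 [_ [_ [_ [_ [Hu1 [Hu2 [Hu3 [Hu4 Hu5]]]]]]]]].
  destruct (consecutive_sqrt k ltac:(lia)) as [Hb1 [_ [Hab _]]].
  destruct (Hrec k) as [_ [_ HrN]].
  rewrite <- (sqrt_sq_INR (S k)) in HrN.
  pose proof (error_step alpha Wb om w (sqrt (INR (S k))) (sqrt (INR k)) (r k) (r (S k))
     halpha Hom Hfw Hw HWb Ha0 ltac:(lra) Hab Hu1 Hu2 Hu3 Hu4 Hu5 HrN (HEb k Hk)) as Hstep.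
  fold C1 in Hstep. unfold E. eapply Rle_trans; [exact Hstep|]. apply Req_le.
  replace (INR (S k) * INR (S k))
    with (sqrt (INR (S k)) * sqrt (INR (S k)) * (sqrt (INR (S k)) * sqrt (INR (S k))))
    by (rewrite sqrt_sq_INR; ring).
  field. lra.
Qed.

End UniformEstimates.

Theorem mainTheorem6 (alpha : R) (halpha : -1 < alpha) (K : Cpx -> Prop)
  (hKsub : forall z, K z -> slit_plane z) (hK : Ccompact K) :
  exists (M : R) (N : nat), forall n : nat, (1 <= n)%nat -> (N <= n)%nat ->
    forall z, K z ->
      Cnorm (Csub (Cdiv (Laguerre n alpha z) (Laguerre n (alpha + 1) z))
                  (Cadd (Csqrt (Cscal (/ INR n) (Copp z)))
                        (Cscal (/ INR n) (Cadd (RtoC (alpha / 2 + 1 / 4)) (Cscal (1 / 2) z)))))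
      <= M / (INR n * sqrt (INR n)).
Proof.
  (* On [K], [w = sqrt(-z)] satisfies [Re w >= om > 0] and [|w| <= Wb]. *)
  destruct (compact_bounds K hKsub hK) as [R [d [HR [Hd HKb]]]].
  set (Wb := R + 1). set (om := Rmin (sqrt (d/2)) 1).
  assert (Hom : 0 < om) by (apply Rmin_glb_lt; [apply sqrt_lt_R0|]; lra).
  assert (Hom1 : om <= 1) by apply Rmin_r.
  destruct (stage2_uniform alpha Wb om halpha Hom ltac:(unfold Wb; lra) ltac:(unfold Wb; lra))
    as [M [N Hest]].
  exists M, N. intros n Hn1 HnN z Hz.
  destruct (HKb z Hz) as [HzR Hzd].
  destruct (Csqrt_opp_bounds z R d HzR Hzd HR) as [Hfw Hnw].
  assert (Hz_eq : negsq (Csqrt (Copp z)) = z) by (unfold negsq; rewrite Csqrt_sq; ceq; ring).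
  rewrite expansion_as_approx by (apply lt_0_INR; lia).
  rewrite <- Hz_eq at 1 2. apply Hest; auto.
  pose proof (Rmin_l (sqrt (d/2)) 1). fold om in H. lra.
Qed.
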